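(* Let $f,g\in\mathcal D$ with $g\lhd f$. Then $Ig\lhd If$ and $Tg\lhd Tf$.
   Context: $\int f:=\int_0^1f(x)\,dx$. $\mathcal D$: the set of continuous strictly decreasing $f\colon[0,1]\to[0,1]$ with $f(0)=1$, $f(1)=0$; for $f\in\mathcal D$, $f^*=f^{-1}\in\mathcal D$ is its inverse function. $(If)(x):=\frac{\int_x^1f}{\int f}$ and $Tf:=I(f^* )$, i.e. $(Tf)(x)=\frac{\int_x^1f^{-1}}{\int f}$. For $f\in\mathcal D$ and $a>0$, $f_{[a]}\colon[0,\frac1a]\to[0,1]$, $x\mapsto f(ax)$; for $b>0$, $f_{[a]}-bg$ is considered on $[0,\min\{1,\frac1a\}]$. Sign switches: for a continuous $\Delta\colon[c_0,d_0]\to\mathbb R$, a closed subinterval $[c,d]$ with $c_0<c\le d<d_0$ and $\Delta([c,d])=\{0\}$ is a sign switch if there is $\delta\in(0,\min\{c-c_0,d_0-d\}]$ with $\Delta(c-x)\Delta(d+x)<0$ for all $x\in(0,\delta]$; $\chi\Delta$ is the number of sign switches. Crossing number: $\chi(f,g):=\sup\{\chi(f_{[a]}-bg): a,b>0\}$. Domination: $g\lhd f$ means $\chi(f,g)=2$ and $g\le f$ pointwise. *)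

From Stdlib Require Import Reals Lra List ClassicalEpsilon.
From Coquelicot Require Import Coquelicot.
Open Scope R_scope.

Definition cont01 (f : R -> R) : Prop :=
  forall x, 0 <= x <= 1 -> forall eps, 0 < eps ->
    exists delta, 0 < delta /\
      forall y, 0 <= y <= 1 -> Rabs (y - x) < delta -> Rabs (f y - f x) < eps.

Definition inD (f : R -> R) : Prop :=
  cont01 f /\
  (forall x, 0 <= x <= 1 -> 0 <= f x <= 1) /\
  (forall x y, 0 <= x -> x < y -> y <= 1 -> f y < f x) /\
  f 0 = 1 /\ f 1 = 0.

Definition int01 (f : R -> R) : R := RInt f 0 1.

(* inverse function f^star on [0,1] (chosen by epsilon; for f in D it is the
   unique x in [0,1] with f x = y) *)
Definition finv (f : R -> R) (y : R) : R :=
  epsilon (inhabits 0) (fun x => 0 <= x <= 1 /\ f x = y).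

Definition Iop (f : R -> R) (x : R) : R := RInt f x 1 / int01 f.

(* T f = I (f^star) ; note int f^star = int f for f in D, but we follow the definition
   T f := I (f^star) literally *)
Definition Top (f : R -> R) : R -> R := Iop (finv f).

Definition sign_switch (Delta : R -> R) (c0 d0 c d : R) : Prop :=
  c0 < c /\ c <= d /\ d < d0 /\
  (forall x, c <= x <= d -> Delta x = 0) /\
  exists delta, 0 < delta /\ delta <= Rmin (c - c0) (d0 - d) /\
    forall x, 0 < x <= delta -> Delta (c - x) * Delta (d + x) < 0.

Definition chi_ge (Delta : R -> R) (c0 d0 : R) (n : nat) : Prop :=
  exists l : list (R * R)%type, List.NoDup l /\ List.length l = n /\
    List.Forall (fun p => sign_switch Delta c0 d0 (fst p) (snd p)) l.

Definition chi (Delta : R -> R) (c0 d0 : R) : Rbar :=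
  Rbar_lub (fun r => exists n : nat, r = Finite (INR n) /\ chi_ge Delta c0 d0 n).

Definition crossing (f g : R -> R) : Rbar :=
  Rbar_lub (fun r => exists a b, 0 < a /\ 0 < b /\
    r = chi (fun x => f (a * x) - b * g x) 0 (Rmin 1 (/ a))).

Definition dominated (g f : R -> R) : Prop :=
  crossing f g = Finite 2 /\ forall x, 0 <= x <= 1 -> g x <= f x.

(* Write D(a, b) for x |-> f (a x) - b g x on the window [0, min(1, 1/a)].  Having k sign
   switches amounts, up to moving b slightly, to having k + 1 points at which D(a, b)
   alternates in sign: the ratio f (a x) / g x has bounded variation, so by a Banach indicatrix
   argument some nearby level b is attained only finitely often, and then every sign change is
   a switch.  For the operator I, the derivative of x |-> If (a x) - b Ig x is a negative
   multiple of D(a, b') for f, g, so by the mean value theorem alternation for If, Ig transfers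
   to f, g; hence If, Ig have at most two switches.  As g <= f, g <> f and there are never three
   switches, If - Ig is nonnegative and somewhere positive, which gives two switches for If, Ig.
   For T, the substitution y = g x maps the switches of f(a .) - b g to those of
   f^*(b .) - a g^*, so that g^* is dominated by f^*, and T = I o (.)^*. *)

From Stdlib Require Import Reals.
From Coquelicot Require Import Coquelicot.
From Stdlib Require Import Lra Lia List Sorting ClassicalEpsilon Classical ZArith.
From Stdlib Require Cantor.
Open Scope R_scope.

(** * Continuity on an interval *)

Definition cont_on (phi : R -> R) (l r : R) : Prop :=
  forall x, l <= x <= r -> forall eps, 0 < eps -> exists delta, 0 < delta /\
    forall y, l <= y <= r -> Rabs (y - x) < delta -> Rabs (phi y - phi x) < eps.

Definition clamp (l r x : R) : R := Rmax l (Rmin r x).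

Lemma clamp_in l r x : l <= r -> l <= clamp l r x <= r.
Proof. intros; unfold clamp, Rmax, Rmin; repeat destruct Rle_dec; lra. Qed.

Lemma clamp_id l r x : l <= x <= r -> clamp l r x = x.
Proof. intros; unfold clamp, Rmax, Rmin; repeat destruct Rle_dec; lra. Qed.

Lemma clamp_lipschitz l r x y : l <= r -> Rabs (clamp l r y - clamp l r x) <= Rabs (y - x).
Proof.
  intros; unfold clamp, Rmax, Rmin; repeat destruct Rle_dec;
  unfold Rabs; repeat destruct Rcase_abs; lra.
Qed.

Lemma continuity_clamp phi l r : l <= r -> cont_on phi l r ->
  continuity (fun x => phi (clamp l r x)).
Proof.
  intros Hlr Hc x eps Heps.
  destruct (Hc (clamp l r x) (clamp_in l r x Hlr) eps Heps) as [d [Hd H]].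
  exists d; split; [lra|]. intros y [_ Hy]. simpl in *. unfold R_dist in *.
  apply H; [apply clamp_in; lra|].
  eapply Rle_lt_trans; [apply clamp_lipschitz; lra | exact Hy].
Qed.

Lemma continuity_cont_on phi l r : (forall x, continuity_pt phi x) -> cont_on phi l r.
Proof.
  intros H x Hx eps He. destruct (H x eps He) as [d [Hd Hd']]. exists d; split; auto.
  intros y Hy Hxy. destruct (Req_dec y x) as [->|Hyx].
  - rewrite Rminus_eq_0, Rabs_R0; auto.
  - apply (Hd' y). split; [split; [exact I | auto] | exact Hxy].
Qed.

Lemma cont_on_subinterval phi l r l' r' :
  cont_on phi l r -> l <= l' -> r' <= r -> cont_on phi l' r'.
Proof.
  intros H H1 H2 x Hx eps He. destruct (H x ltac:(lra) eps He) as [d [Hd Hd']].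
  exists d; split; auto. intros y Hy; apply Hd'; lra.
Qed.

Lemma cont_on_ext phi psi l r : (forall x, l <= x <= r -> phi x = psi x) ->
  cont_on phi l r -> cont_on psi l r.
Proof.
  intros E H x Hx eps He. destruct (H x Hx eps He) as [d [Hd Hd']]. exists d; split; auto.
  intros y Hy Hxy. rewrite <- !E by auto. auto.
Qed.

Lemma cont_on_const k l r : cont_on (fun _ => k) l r.
Proof. intros x Hx eps He. exists 1. split; [lra|]. intros. rewrite Rminus_eq_0, Rabs_R0. auto. Qed.

Lemma cont_on_opp phi l r : cont_on phi l r -> cont_on (fun x => - phi x) l r.
Proof.
  intros H x Hx eps He. destruct (H x Hx eps He) as [d [Hd Hd']].
  exists d; split; auto. intros y Hy Hxy.
  replace (- phi y - - phi x) with (- (phi y - phi x)) by ring. rewrite Rabs_Ropp; auto.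
Qed.

Lemma cont_on_minus_scal phi psi k l r : cont_on phi l r -> cont_on psi l r ->
  cont_on (fun x => phi x - k * psi x) l r.
Proof.
  intros H1 H2 x Hx eps He.
  assert (Hk : 0 < Rabs k + 1) by (pose proof (Rabs_pos k); lra).
  destruct (H1 x Hx (eps / 2) ltac:(lra)) as [d1 [Hd1 Hd1']].
  destruct (H2 x Hx (eps / 2 / (Rabs k + 1))) as [d2 [Hd2 Hd2']].
  { apply Rdiv_lt_0_compat; lra. }
  exists (Rmin d1 d2); split; [apply Rmin_pos; auto|].
  intros y Hy Hxy. pose proof (Rmin_l d1 d2). pose proof (Rmin_r d1 d2).
  specialize (Hd1' y Hy ltac:(lra)). specialize (Hd2' y Hy ltac:(lra)).
  replace (phi y - k * psi y - (phi x - k * psi x))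
    with ((phi y - phi x) - k * (psi y - psi x)) by ring.
  eapply Rle_lt_trans; [apply Rabs_triang|]. rewrite Rabs_Ropp, Rabs_mult.
  assert (Rabs k * Rabs (psi y - psi x) <= (Rabs k + 1) * Rabs (psi y - psi x)).
  { apply Rmult_le_compat_r; [apply Rabs_pos | lra]. }
  assert ((Rabs k + 1) * Rabs (psi y - psi x) < eps / 2).
  { apply Rmult_lt_compat_l with (r := Rabs k + 1) in Hd2'; [|lra].
    field_simplify in Hd2'; lra. }
  lra.
Qed.

Lemma cont_on_comp_scal phi a l r : 0 < a -> cont_on phi (a * l) (a * r) ->
  cont_on (fun x => phi (a * x)) l r.
Proof.
  intros Ha H x Hx eps He.
  destruct (H (a * x) ltac:(split; apply Rmult_le_compat_l; lra) eps He) as [d [Hd Hd']].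
  exists (d / a); split; [apply Rdiv_lt_0_compat; lra|].
  intros y Hy Hxy. apply Hd'; [split; apply Rmult_le_compat_l; lra|].
  replace (a * y - a * x) with (a * (y - x)) by ring.
  rewrite Rabs_mult, (Rabs_right a) by lra.
  apply Rmult_lt_compat_l with (r := a) in Hxy; [|lra]. field_simplify in Hxy; lra.
Qed.

Lemma cont_on_root phi l r : l < r -> cont_on phi l r -> phi l * phi r < 0 ->
  exists z, l < z < r /\ phi z = 0.
Proof.
  intros Hlr Hc Hs.
  assert (Hup : forall psi, cont_on psi l r -> psi l < 0 -> 0 < psi r ->
            exists z, l < z < r /\ psi z = 0).
  { intros psi Hpsi H1 H2.
    destruct (IVT (fun x => psi (clamp l r x)) l r (continuity_clamp psi l r ltac:(lra) Hpsi) Hlr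
                ltac:(cbv beta; rewrite clamp_id; lra) ltac:(cbv beta; rewrite clamp_id; lra))
      as [z [Hz Hz']].
    rewrite clamp_id in Hz' by lra. exists z. split; [|auto].
    destruct (Req_dec z l); [subst; lra|]. destruct (Req_dec z r); [subst; lra|]. lra. }
  destruct (Rtotal_order (phi l) 0) as [Hn|[E|Hp]].
  - apply Hup; auto. nra.
  - rewrite E in Hs; lra.
  - destruct (Hup (fun x => - phi x) (cont_on_opp _ _ _ Hc)
                ltac:(cbv beta; lra) ltac:(cbv beta; nra))
      as [z [Hz Hz']].
    exists z. split; auto. lra.
Qed.

Lemma cont_on_same_sign phi l r : cont_on phi l r -> (forall x, l <= x <= r -> phi x <> 0) ->
  forall x y, l <= x <= r -> l <= y <= r -> 0 < phi x * phi y.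
Proof.
  intros Hc Hnz.
  assert (K : forall x y, l <= x <= r -> l <= y <= r -> x < y -> 0 < phi x * phi y).
  { intros x y Hx Hy Hxy. pose proof (Hnz x Hx). pose proof (Hnz y Hy).
    destruct (Rlt_le_dec 0 (phi x * phi y)) as [Q|Q]; auto. exfalso.
    assert (Hneg : phi x * phi y < 0)
      by (destruct (Rle_lt_or_eq _ _ Q) as [|E]; auto; apply Rmult_integral in E; tauto).
    destruct (cont_on_root phi x y Hxy ltac:(eapply cont_on_subinterval; eauto; lra) Hneg)
      as [z [Hz Hz']].
    apply (Hnz z); auto; lra. }
  intros x y Hx Hy. destruct (Rtotal_order x y) as [H|[<-|H]].
  - apply K; auto.
  - pose proof (Hnz x Hx). destruct (Rlt_le_dec 0 (phi x)); nra.
  - rewrite Rmult_comm. apply K; auto.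
Qed.

Lemma cont_on_sign_nbhd phi l r x : cont_on phi l r -> l <= x <= r -> phi x <> 0 ->
  exists d, 0 < d /\ forall y, l <= y <= r -> Rabs (y - x) < d -> 0 < phi y * phi x.
Proof.
  intros Hc Hx Hnz.
  destruct (Hc x Hx (Rabs (phi x)) (Rabs_pos_lt _ Hnz)) as [d [Hd Hd']].
  exists d. split; auto. intros y Hy Hyx. specialize (Hd' y Hy Hyx).
  unfold Rabs in *. destruct (Rcase_abs (phi y - phi x)); destruct (Rcase_abs (phi x)); nra.
Qed.

Lemma cont_on_lt_nbhd phi l r x M : cont_on phi l r -> l <= x <= r -> phi x < M ->
  exists d, 0 < d /\ forall y, l <= y <= r -> Rabs (y - x) < d -> phi y < M.
Proof.
  intros Hc Hx HM. destruct (Hc x Hx (M - phi x) ltac:(lra)) as [d [Hd H]].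
  exists d. split; auto. intros y Hy Hyx. specialize (H y Hy Hyx). apply Rabs_def2 in H. lra.
Qed.

Lemma sign_near_left_end phi l r m : cont_on phi l r -> l < r -> l < m -> phi l <> 0 ->
  exists y, l < y < m /\ y < r /\ 0 < phi y * phi l.
Proof.
  intros Hc Hlr Hm Hnz.
  destruct (cont_on_sign_nbhd phi l r l Hc ltac:(lra) Hnz) as [d [Hd H]].
  set (e := Rmin d (Rmin (m - l) (r - l)) / 2).
  pose proof (Rmin_l d (Rmin (m - l) (r - l))). pose proof (Rmin_r d (Rmin (m - l) (r - l))).
  pose proof (Rmin_l (m - l) (r - l)). pose proof (Rmin_r (m - l) (r - l)).
  assert (0 < Rmin d (Rmin (m - l) (r - l))) by (apply Rmin_pos; [lra | apply Rmin_pos; lra]).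
  exists (l + e). unfold e. split; [lra|]. split; [lra|].
  apply H; [lra|]. rewrite Rabs_right; lra.
Qed.

Lemma sign_near_right_end phi l r m : cont_on phi l r -> l < r -> m < r -> phi r <> 0 ->
  exists y, m < y < r /\ l < y /\ 0 < phi y * phi r.
Proof.
  intros Hc Hlr Hm Hnz.
  destruct (cont_on_sign_nbhd phi l r r Hc ltac:(lra) Hnz) as [d [Hd H]].
  set (e := Rmin d (Rmin (r - m) (r - l)) / 2).
  pose proof (Rmin_l d (Rmin (r - m) (r - l))). pose proof (Rmin_r d (Rmin (r - m) (r - l))).
  pose proof (Rmin_l (r - m) (r - l)). pose proof (Rmin_r (r - m) (r - l)).
  assert (0 < Rmin d (Rmin (r - m) (r - l))) by (apply Rmin_pos; [lra | apply Rmin_pos; lra]).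
  exists (r - e). unfold e. split; [lra|]. split; [lra|].
  apply H; [lra|]. rewrite Rabs_left; lra.
Qed.

Lemma first_root phi u v : u < v -> cont_on phi u v -> 0 < phi u -> phi v < 0 ->
  exists z, u < z < v /\ phi z = 0 /\ forall y, u <= y < z -> 0 < phi y.
Proof.
  intros Huv Hc Hu Hv.
  set (S := fun x => u <= x <= v /\ forall y, u <= y <= x -> 0 < phi y).
  assert (Su : S u) by (split; [lra | intros y Hy; replace y with u by lra; auto]).
  assert (HB : bound S) by (exists v; intros x [Hx _]; lra).
  destruct (completeness S HB (ex_intro _ u Su)) as [z [Hz1 Hz2]].
  assert (Huz : u <= z) by (apply Hz1, Su).
  assert (Hzv : z <= v) by (apply Hz2; intros x [Hx _]; lra).
  assert (Hbelow : forall y, u <= y < z -> 0 < phi y).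
  { intros y Hy. destruct (classic (exists x, S x /\ y < x)) as [[x [[_ Hx] Hyx]] | Hn].
    - apply Hx; lra.
    - exfalso. assert (z <= y); [|lra]. apply Hz2. intros x Hx.
      destruct (Rle_dec x y); auto. exfalso; apply Hn; exists x; split; auto; lra. }
  assert (Hz0 : phi z = 0).
  { destruct (Req_dec (phi z) 0) as [|Hnz]; auto. exfalso.
    destruct (cont_on_sign_nbhd phi u v z Hc ltac:(lra) Hnz) as [d [Hd H]].
    destruct (Rlt_le_dec (phi z) 0) as [Hneg | Hpos].
    - assert (Hzu : u < z) by (destruct (Req_dec u z) as [<-|]; lra).
      set (y := Rmax u (z - d / 2)).
      assert (u <= y < z) by (unfold y, Rmax; destruct Rle_dec; lra).
      specialize (H y ltac:(lra) ltac:(unfold y, Rmax in *; destruct Rle_dec;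
                                       rewrite Rabs_left; lra)).
      specialize (Hbelow y ltac:(lra)). nra.
    - assert (Hzv' : z < v) by (destruct (Req_dec z v) as [->|]; lra).
      set (x := Rmin v (z + d / 2)).
      assert (z < x <= v) by (unfold x, Rmin; destruct Rle_dec; lra).
      assert (S x); [|specialize (Hz1 x ltac:(auto)); lra].
      split; [lra|]. intros y Hy. destruct (Rlt_le_dec y z); [apply Hbelow; lra|].
      destruct (Req_dec y z) as [->|]; [lra|].
      specialize (H y ltac:(lra) ltac:(unfold x, Rmin in *; destruct Rle_dec;
                                       rewrite Rabs_right; lra)). nra. }
  exists z. split; [|split; [exact Hz0 | exact Hbelow]].
  split; [destruct (Req_dec u z) as [<-|] | destruct (Req_dec z v) as [->|]]; lra.
Qed.

Lemma list_min_pos {A} (g : A -> R) (l : list A) : Forall (fun x => 0 < g x) l ->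
  exists delta, 0 < delta /\ Forall (fun x => delta <= g x) l.
Proof.
  induction 1 as [|x l Hx _ [d [Hd Hl]]].
  - exists 1. split; [lra | constructor].
  - exists (Rmin (g x) d). split; [apply Rmin_pos; auto|].
    constructor; [apply Rmin_l|].
    eapply Forall_impl; [|exact Hl]. intros y Hy. pose proof (Rmin_r (g x) d). lra.
Qed.

Lemma points_min_pos (g : nat -> R) k : (forall i, (i <= k)%nat -> 0 < g i) ->
  exists delta, 0 < delta /\ forall i, (i <= k)%nat -> delta <= g i.
Proof.
  intros H. destruct (list_min_pos g (seq 0 (S k))) as [d [Hd Hl]].
  - apply Forall_forall. intros i Hi. apply in_seq in Hi. apply H. lia.
  - exists d. split; auto. intros i Hi. rewrite Forall_forall in Hl. apply Hl, in_seq. lia.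
Qed.

Lemma cont_on_uniform_at_points phi l r (pt : nat -> R) k rho :
  cont_on phi l r -> 0 < rho -> (forall i, (i <= k)%nat -> l <= pt i <= r) ->
  exists eta, 0 < eta /\ forall i, (i <= k)%nat -> forall y, l <= y <= r ->
    Rabs (y - pt i) < eta -> Rabs (phi y - phi (pt i)) < rho.
Proof.
  intros Hc Hr Hpt. induction k as [|k IH].
  - destruct (Hc (pt O) (Hpt O (le_n 0)) rho Hr) as [d [Hd Hd']]. exists d. split; auto.
    intros i Hi. replace i with O by lia. auto.
  - destruct IH as [e1 [He1 H1]]; [intros; apply Hpt; lia|].
    destruct (Hc (pt (S k)) (Hpt (S k) (le_n _)) rho Hr) as [d [Hd Hd']].
    exists (Rmin e1 d). split; [apply Rmin_pos; auto|].
    intros i Hi y Hy Hyi. pose proof (Rmin_l e1 d). pose proof (Rmin_r e1 d).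
    destruct (Nat.eq_dec i (S k)) as [->|]; [apply Hd'; auto; lra | apply H1; auto; lia || lra].
Qed.

Lemma small_perturbation_keeps_sign (D e : R) : Rabs e <= Rabs D / 2 -> D <> 0 ->
  0 < (D - e) * D.
Proof.
  intros H HD. pose proof (Rabs_pos_lt _ HD).
  unfold Rabs in *; destruct (Rcase_abs e); destruct (Rcase_abs D); nra.
Qed.

(** * Isolated crossings *)

Definition root_list (phi : R -> R) (u v : R) (zs : list R) : Prop :=
  Forall (fun z => u <= z <= v /\ phi z = 0) zs /\ StronglySorted Rlt zs.

Lemma root_list_cons phi u v z zs : u <= z <= v -> phi z = 0 -> Forall (Rlt z) zs ->
  root_list phi u v zs -> root_list phi u v (z :: zs).
Proof. intros Hz Hz0 Hlt [HF HS]. split; constructor; auto. Qed.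

Lemma root_list_long_of_accumulating phi u v z : u <= z < v ->
  (forall x, z < x < v -> phi x <= 0) ->
  (forall eta, 0 < eta -> exists x, 0 < x <= eta /\ 0 <= phi (z + x)) ->
  forall k, exists zs, root_list phi u v zs /\ length zs = k.
Proof.
  intros Hz Hle Hacc k.
  enough (H : exists zs m, root_list phi u v zs /\ length zs = k /\ z < m <= v /\
                Forall (Rle m) zs) by (destruct H as [zs [m [? [? _]]]]; eauto).
  induction k as [|k [zs [m [Hzs [Hl [Hm HFm]]]]]].
  - exists nil, v. split; [split; constructor | split; [reflexivity | split; [lra | constructor]]].
  - destruct (Hacc ((m - z) / 2) ltac:(lra)) as [x [Hx Hpx]].
    assert (phi (z + x) = 0) by (specialize (Hle (z + x) ltac:(lra)); lra).
    exists ((z + x) :: zs), (z + x). split; [|split; [simpl; lia | split; [lra|]]].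
    + apply root_list_cons; auto; [lra|].
      eapply Forall_impl; [|exact HFm]. simpl; intros; lra.
    + constructor; [lra|]. eapply Forall_impl; [|exact HFm]. simpl; intros; lra.
Qed.

Lemma isolated_down_crossing N : forall u v phi, u < v -> cont_on phi u v ->
  0 < phi u -> phi v < 0 ->
  (forall zs, root_list phi u v zs -> (length zs <= N)%nat) ->
  exists z eta, u < z < v /\ phi z = 0 /\ 0 < eta /\
    forall x, 0 < x <= eta -> 0 < phi (z - x) /\ phi (z + x) < 0.
Proof.
  induction N as [|N IH]; intros u v phi Huv Hc Hu Hv Hb;
  destruct (first_root phi u v Huv Hc Hu Hv) as [z [Hz [Hz0 Hleft]]].
  - exfalso. assert (Hz1 : root_list phi u v (z :: nil))
      by (apply root_list_cons; auto; [lra | split; constructor]).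
    specialize (Hb _ Hz1). simpl in Hb. lia.
  - (* Right of the first zero z, either phi is negative at once, or it turns positive again
       (recurse, one root being used up), or its zeros accumulate at z. *)
    destruct (classic (exists eta, 0 < eta /\ forall x, 0 < x <= eta -> phi (z + x) < 0))
      as [[eta [He Heta]] | Hnot].
    + exists z, (Rmin eta (z - u)). pose proof (Rmin_l eta (z - u)).
      pose proof (Rmin_r eta (z - u)). repeat split; auto; try lra.
      * apply Rmin_pos; lra.
      * apply Hleft; lra.
      * apply Heta; lra.
    + destruct (classic (exists x, z < x < v /\ 0 < phi x)) as [[x [Hx Hpx]] | Hnone].
      * destruct (IH x v phi ltac:(lra) (cont_on_subinterval phi u v x v Hc ltac:(lra) ltac:(lra))
                    Hpx Hv) as [z' [eta [Hz' Hrest]]].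
        { intros zs [HF HS].
          assert (Hzs : root_list phi u v (z :: zs)).
          { apply root_list_cons; auto; [lra | |].
            - eapply Forall_impl; [|exact HF]. simpl; intros; lra.
            - split; auto. eapply Forall_impl; [|exact HF]. simpl; intros; split; [lra | tauto]. }
          specialize (Hb _ Hzs). simpl in Hb. lia. }
        exists z', eta. split; [lra | auto].
      * exfalso.
        assert (Hle : forall x, z < x < v -> phi x <= 0).
        { intros x Hx. apply Rnot_lt_le. intro. apply Hnone. eauto. }
        assert (Hacc : forall eta, 0 < eta -> exists x, 0 < x <= eta /\ 0 <= phi (z + x)).
        { intros eta He. apply NNPP. intro Hn. apply Hnot. exists eta. split; auto.
          intros x Hx. apply Rnot_le_lt. intro. apply Hn. eauto. }
        destruct (root_list_long_of_accumulating phi u v z ltac:(lra) Hle Hacc (S (S N)))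
          as [zs [H1 H2]].
        specialize (Hb _ H1). lia.
Qed.

(** * Levels attained finitely often by a function of bounded variation *)

Lemma sum_n_m_le_loc (a b : nat -> R) n m :
  (forall k, (n <= k <= m)%nat -> a k <= b k) -> sum_n_m a n m <= sum_n_m b n m.
Proof.
  intros H. rewrite (sum_n_m_ext_loc a (fun k => Rmin (a k) (b k))).
  - apply sum_n_m_le. intros k. apply Rmin_r.
  - intros k Hk. rewrite Rmin_left; auto.
Qed.

Lemma sum_n_m_nonneg (g : nat -> R) n m : (forall k, 0 <= g k) -> 0 <= sum_n_m g n m.
Proof.
  intros H. pose proof (sum_n_m_le (fun _ => 0) g n m H) as Hle.
  rewrite (sum_n_m_const_zero (G := R_AbelianMonoid)) in Hle. exact Hle.
Qed.

Lemma sum_n_m_telescope (f : nat -> R) m :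
  sum_n_m (fun j => f (S j) - f j) 0 m = f (S m) - f O.
Proof.
  induction m as [|m IH]; [rewrite sum_n_n; reflexivity|].
  rewrite sum_n_Sm by lia. rewrite IH. unfold plus; simpl. ring.
Qed.

Lemma sum_n_m_pairs (g : nat -> R) m :
  sum_n_m g 0 (S (2 * m)) = sum_n_m (fun j => g (2 * j)%nat + g (S (2 * j))) 0 m.
Proof.
  induction m as [|m IH].
  - rewrite sum_n_Sm, !sum_n_n by lia. reflexivity.
  - replace (S (2 * S m)) with (S (S (S (2 * m)))) by lia.
    do 2 rewrite sum_n_Sm by lia. rewrite IH, (sum_n_Sm _ 0 m) by lia.
    replace (2 * S m)%nat with (S (S (2 * m))) by lia. unfold plus; simpl. ring.
Qed.

Lemma sum_n_m_drop_front (g : nat -> R) lo j m : (forall k, 0 <= g k) -> (lo <= j)%nat ->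
  sum_n_m g j m <= sum_n_m g lo m.
Proof.
  intros Hg Hj. induction Hj as [|j Hj IH]; [lra|].
  eapply Rle_trans; [|exact IH].
  destruct (le_lt_dec j m).
  - rewrite (sum_Sn_m g j m) by auto. unfold plus; simpl. specialize (Hg j). lra.
  - rewrite !sum_n_m_zero by lia. lra.
Qed.

Lemma sum_n_m_ge_count (g : nat -> R) K js : (forall k, 0 <= g k) -> StronglySorted lt js ->
  forall lo m, Forall (fun j => (lo <= j <= m)%nat /\ K <= g j) js ->
  INR (length js) * K <= sum_n_m g lo m.
Proof.
  intros Hg. induction 1 as [|j js Hs IH Hj]; intros lo m HF.
  - simpl. rewrite Rmult_0_l. apply sum_n_m_nonneg; auto.
  - inversion HF as [|? ? [Hlo HK] HF']; subst.
    change (length (j :: js)) with (S (length js)). rewrite S_INR.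
    eapply Rle_trans; [|apply (sum_n_m_drop_front g lo j m Hg ltac:(lia))].
    rewrite (sum_Sn_m g j m) by lia. unfold plus; simpl.
    assert (INR (length js) * K <= sum_n_m g (S j) m).
    { apply IH. rewrite Forall_forall in *. intros x Hx.
      specialize (Hj x Hx). destruct (HF' x Hx). split; auto; lia. }
    lra.
Qed.

Definition overlap (a b c e : R) : R := Rmax 0 (Rmin b e - Rmax a c).

Lemma overlap_nonneg a b c e : 0 <= overlap a b c e.
Proof. apply Rmax_l. Qed.

Lemma overlap_split a b c m e : c <= m <= e ->
  overlap a b c e = overlap a b c m + overlap a b m e.
Proof. intros; unfold overlap, Rmax, Rmin; repeat destruct Rle_dec; lra. Qed.

Lemma overlap_union a b a1 b1 a2 b2 c e : a1 <= b1 -> a2 <= b2 -> Rmax a1 a2 <= Rmin b1 b2 ->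
  Rmin a1 a2 <= a -> b <= Rmax b1 b2 -> overlap a b c e <= overlap a1 b1 c e + overlap a2 b2 c e.
Proof. intros; unfold overlap, Rmax, Rmin in *; repeat destruct Rle_dec; lra. Qed.

Lemma overlap_le_length a b c e : a <= b -> overlap a b c e <= b - a.
Proof. intros; unfold overlap, Rmax, Rmin; repeat destruct Rle_dec; lra. Qed.

Lemma overlap_full a b c e : a <= c -> c <= e -> e <= b -> overlap a b c e = e - c.
Proof. intros; unfold overlap, Rmax, Rmin; repeat destruct Rle_dec; lra. Qed.

Lemma overlap_point a b c : overlap a b c c = 0.
Proof. unfold overlap, Rmax, Rmin; repeat destruct Rle_dec; lra. Qed.

Lemma INR_le_pow2 n : INR n <= 2 ^ n.
Proof.
  induction n as [|n IH]; [simpl; lra|]. rewrite S_INR.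
  assert (1 <= 2 ^ n) by (apply pow_R1_Rle; lra). simpl. lra.
Qed.

Lemma nat_above (x : R) : exists N : nat, x <= INR N.
Proof.
  destruct (archimed x) as [Hup _]. destruct (Rle_dec x 0).
  - exists O; simpl; lra.
  - assert (Hpos : 0 <= IZR (up x)) by lra. apply le_IZR in Hpos. exists (Z.to_nat (up x)).
    rewrite INR_IZR_INZ, Z2Nat.id by lia; lra.
Qed.

Lemma dyadic_small (L t : R) : 0 < t -> exists n, L / 2 ^ n < t.
Proof.
  intros Ht. destruct (nat_above (L / t)) as [n Hn]. exists (S n).
  pose proof (INR_le_pow2 n). assert (0 < 2 ^ n) by (apply pow_lt; lra).
  apply Rmult_lt_reg_r with (r := 2 ^ S n); [apply pow_lt; lra|].
  unfold Rdiv at 1. rewrite Rmult_assoc, Rinv_l by (apply pow_nonzero; lra). simpl.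
  apply Rmult_le_compat_r with (r := t) in Hn; [|lra].
  unfold Rdiv in Hn. rewrite Rmult_assoc, Rinv_l, Rmult_1_r in Hn by lra. nra.
Qed.

Lemma dyadic_antitone (L : R) n m : 0 <= L -> (n <= m)%nat -> L / 2 ^ m <= L / 2 ^ n.
Proof.
  intros HL Hnm. assert (0 < 2 ^ n) by (apply pow_lt; lra).
  assert (2 ^ n <= 2 ^ m) by (apply Rle_pow; [lra | lia]).
  unfold Rdiv. apply Rmult_le_compat_l; auto. apply Rinv_le_contravar; auto.
Qed.

Lemma StronglySorted_weaken {A} (R1 R2 : A -> A -> Prop) l :
  (forall x y, R1 x y -> R2 x y) -> StronglySorted R1 l -> StronglySorted R2 l.
Proof. intros H; induction 1; constructor; auto. eapply Forall_impl; [|eauto]. auto. Qed.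

Lemma sorted_gaps_dyadic (L : R) zs : 0 <= L -> StronglySorted Rlt zs ->
  exists n, StronglySorted (fun x y => L / 2 ^ n < y - x) zs.
Proof.
  intros HL. induction 1 as [|a l _ [n1 Hn1] Hal].
  - exists O; constructor.
  - assert (exists n2, Forall (fun y => L / 2 ^ n2 < y - a) l) as [n2 Hn2].
    { clear Hn1. induction Hal as [|x l Hx _ [m Hm]]; [exists O; constructor|].
      destruct (dyadic_small L (x - a) ltac:(lra)) as [k Hk].
      exists (m + k)%nat. constructor.
      - pose proof (dyadic_antitone L k (m + k) HL ltac:(lia)). lra.
      - eapply Forall_impl; [|exact Hm]. simpl. intros y Hy.
        pose proof (dyadic_antitone L m (m + k) HL ltac:(lia)). lra. }
    exists (n1 + n2)%nat. constructor.
    + eapply StronglySorted_weaken; [|exact Hn1]. simpl. intros x y Hxy.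
      pose proof (dyadic_antitone L n1 (n1 + n2) HL ltac:(lia)). lra.
    + eapply Forall_impl; [|exact Hn2]. simpl. intros y Hy.
      pose proof (dyadic_antitone L n2 (n1 + n2) HL ltac:(lia)). lra.
Qed.

Definition sup_on (phi : R -> R) (l r : R) : R :=
  epsilon (inhabits 0) (is_lub (fun y => exists x, l <= x <= r /\ y = phi x)).

Lemma sup_on_spec phi l r : l <= r -> (exists B, forall x, l <= x <= r -> phi x <= B) ->
  is_lub (fun y => exists x, l <= x <= r /\ y = phi x) (sup_on phi l r).
Proof.
  intros Hlr [B HB]. unfold sup_on. apply epsilon_spec.
  destruct (completeness (fun y => exists x, l <= x <= r /\ y = phi x)) as [m Hm]; eauto.
  - exists B. intros y [x [Hx ->]]. auto.
  - exists (phi l), l. split; auto; lra.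
Qed.

Lemma dependent_choice_pairs (Inv : nat -> R -> R -> Prop)
  (Step : nat -> R -> R -> R -> R -> Prop) a0 b0 :
  Inv O a0 b0 ->
  (forall s a b, Inv s a b -> exists a' b', Inv (S s) a' b' /\ Step s a b a' b') ->
  exists A B : nat -> R, forall s, Inv s (A s) (B s) /\ Step s (A s) (B s) (A (S s)) (B (S s)).
Proof.
  intros H0 HS.
  set (next := fun s (ab : R * R) => epsilon (inhabits (0, 0)) (fun ab' : R * R =>
         Inv (S s) (fst ab') (snd ab') /\ Step s (fst ab) (snd ab) (fst ab') (snd ab'))).
  assert (Hnext : forall s ab, Inv s (fst ab) (snd ab) ->
     Inv (S s) (fst (next s ab)) (snd (next s ab)) /\
     Step s (fst ab) (snd ab) (fst (next s ab)) (snd (next s ab))).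
  { intros s ab H. destruct (HS s _ _ H) as [a' [b' H']].
    apply (epsilon_spec (inhabits (0, 0))). exists (a', b'). exact H'. }
  set (seqf := fix seqf (s : nat) : R * R :=
         match s with O => (a0, b0) | S s' => next s' (seqf s') end).
  assert (HI : forall s, Inv s (fst (seqf s)) (snd (seqf s))).
  { induction s; [exact H0 | apply Hnext; auto]. }
  exists (fun s => fst (seqf s)), (fun s => snd (seqf s)). intros s. split; auto.
  apply Hnext; auto.
Qed.

Lemma nested_intervals_point (A B : nat -> R) : (forall s, A s <= A (S s)) ->
  (forall s, B (S s) <= B s) -> (forall s, A s <= B s) -> exists c, forall s, A s <= c <= B s.
Proof.
  intros HA HB HAB.
  assert (HA' : forall s t, (s <= t)%nat -> A s <= A t)
    by (intros s t Hst; induction Hst; [lra | specialize (HA m); lra]).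
  assert (HB' : forall s t, (s <= t)%nat -> B t <= B s)
    by (intros s t Hst; induction Hst; [lra | specialize (HB m); lra]).
  assert (Hcross : forall s t, A t <= B s).
  { intros s t. destruct (Nat.le_ge_cases s t) as [H|H].
    - specialize (HB' s t H). specialize (HAB t). lra.
    - specialize (HA' t s H). specialize (HAB s). lra. }
  destruct (completeness (fun y => exists s, y = A s)) as [c [Hc1 Hc2]].
  - exists (B O). intros y [s ->]. apply Hcross.
  - exists (A O), O. reflexivity.
  - exists c. intros s. split; [apply Hc1; exists s; auto|].
    apply Hc2. intros y [t ->]. apply Hcross.
Qed.

Section GenericLevel.

Variables (h P : R -> R) (p q : R).
Hypothesis Hpq : p < q.
Hypothesis Hvar : forall s t, p <= s -> s <= t -> t <= q -> Rabs (h t - h s) <= P t - P s.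

Lemma P_monotone s t : p <= s -> s <= t -> t <= q -> P s <= P t.
Proof.
  intros Hs Hst Ht. pose proof (Hvar s t Hs Hst Ht). pose proof (Rabs_pos (h t - h s)). lra.
Qed.

Lemma h_oscillation l r : p <= l -> l <= r -> r <= q ->
  forall x y, l <= x <= r -> l <= y <= r -> h x - h y <= P r - P l.
Proof.
  intros Hl Hlr Hr x y Hx Hy.
  assert (P l <= P (Rmin x y))
    by (apply P_monotone; unfold Rmin; repeat destruct Rle_dec; lra).
  assert (P (Rmax x y) <= P r)
    by (apply P_monotone; unfold Rmax; repeat destruct Rle_dec; lra).
  destruct (Rle_dec x y) as [Hxy|Hxy].
  - pose proof (Hvar x y ltac:(lra) Hxy ltac:(lra)).
    pose proof (Rle_abs (h x - h y)) as Habs. rewrite Rabs_minus_sym in Habs.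
    unfold Rmin, Rmax in *; repeat destruct Rle_dec; lra.
  - pose proof (Hvar y x ltac:(lra) ltac:(lra) ltac:(lra)). pose proof (Rle_abs (h x - h y)).
    unfold Rmin, Rmax in *; repeat destruct Rle_dec; lra.
Qed.

Definition hmax l r := sup_on h l r.
Definition hmin l r := - sup_on (fun x => - h x) l r.

Lemma hmax_spec l r : p <= l -> l <= r -> r <= q ->
  is_lub (fun y => exists x, l <= x <= r /\ y = h x) (hmax l r).
Proof.
  intros Hl Hlr Hr. apply sup_on_spec; auto. exists (h l + (P r - P l)). intros x Hx.
  pose proof (h_oscillation l r Hl Hlr Hr x l Hx ltac:(lra)). lra.
Qed.

Lemma hmin_spec l r : p <= l -> l <= r -> r <= q ->
  is_lub (fun y => exists x, l <= x <= r /\ y = - h x) (- hmin l r).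
Proof.
  intros Hl Hlr Hr. unfold hmin. rewrite Ropp_involutive. apply sup_on_spec; auto.
  exists (- h l + (P r - P l)). intros x Hx.
  pose proof (h_oscillation l r Hl Hlr Hr l x ltac:(lra) Hx). lra.
Qed.

Lemma hmax_ge l r x : p <= l -> l <= r -> r <= q -> l <= x <= r -> h x <= hmax l r.
Proof. intros Hl Hlr Hr Hx. apply (proj1 (hmax_spec l r Hl Hlr Hr)). exists x; auto. Qed.

Lemma hmax_le l r B : p <= l -> l <= r -> r <= q -> (forall x, l <= x <= r -> h x <= B) ->
  hmax l r <= B.
Proof.
  intros Hl Hlr Hr HB. apply (proj2 (hmax_spec l r Hl Hlr Hr)). intros y [x [Hx ->]]. auto.
Qed.

Lemma hmin_le l r x : p <= l -> l <= r -> r <= q -> l <= x <= r -> hmin l r <= h x.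
Proof.
  intros Hl Hlr Hr Hx. enough (- h x <= - hmin l r) by lra.
  apply (proj1 (hmin_spec l r Hl Hlr Hr)). exists x; auto.
Qed.

Lemma hmin_ge l r B : p <= l -> l <= r -> r <= q -> (forall x, l <= x <= r -> B <= h x) ->
  B <= hmin l r.
Proof.
  intros Hl Hlr Hr HB. enough (- hmin l r <= - B) by lra.
  apply (proj2 (hmin_spec l r Hl Hlr Hr)). intros y [x [Hx ->]]. specialize (HB x Hx). lra.
Qed.

Lemma hmin_le_hmax l r : p <= l -> l <= r -> r <= q -> hmin l r <= hmax l r.
Proof.
  intros Hl Hlr Hr. pose proof (hmin_le l r l Hl Hlr Hr ltac:(lra)).
  pose proof (hmax_ge l r l Hl Hlr Hr ltac:(lra)). lra.
Qed.

Lemma hmax_sub_hmin l r : p <= l -> l <= r -> r <= q -> hmax l r - hmin l r <= P r - P l.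
Proof.
  intros Hl Hlr Hr. enough (hmax l r - (P r - P l) <= hmin l r) by lra.
  apply hmin_ge; auto. intros y Hy. enough (hmax l r <= h y + (P r - P l)) by lra.
  apply hmax_le; auto. intros x Hx. pose proof (h_oscillation l r Hl Hlr Hr x y Hx Hy). lra.
Qed.

Definition dyad n (j : nat) := p + INR j * (q - p) / 2 ^ n.

Lemma dyad_monotone n j k : (j <= k)%nat -> dyad n j <= dyad n k.
Proof.
  intros H. unfold dyad. apply le_INR in H. assert (0 < 2 ^ n) by (apply pow_lt; lra).
  unfold Rdiv. apply Rplus_le_compat_l, Rmult_le_compat_r; [left; apply Rinv_0_lt_compat; auto|].
  apply Rmult_le_compat_r; lra.
Qed.

Lemma dyad_0 n : dyad n 0 = p.
Proof. unfold dyad. simpl. field. apply pow_nonzero; lra. Qed.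

Lemma dyad_top n : dyad n (2 ^ n)%nat = q.
Proof.
  unfold dyad. rewrite pow_INR. replace (INR 2) with 2 by (simpl; lra).
  field. apply pow_nonzero; lra.
Qed.

Lemma dyad_in n j : (j <= 2 ^ n)%nat -> p <= dyad n j <= q.
Proof.
  intros. rewrite <- (dyad_0 n), <- (dyad_top n) at 1.
  split; apply dyad_monotone; lia.
Qed.

Lemma dyad_double n j : dyad (S n) (2 * j) = dyad n j.
Proof. unfold dyad. rewrite mult_INR. simpl. field. apply pow_nonzero; lra. Qed.

Lemma dyad_succ n j : dyad n (S j) = dyad n j + (q - p) / 2 ^ n.
Proof. unfold dyad. rewrite S_INR. field. apply pow_nonzero; lra. Qed.

Lemma dyad_cell_exists n m : (1 <= m)%nat -> forall z, p <= z <= dyad n m ->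
  exists j, (j < m)%nat /\ dyad n j <= z <= dyad n (S j).
Proof.
  induction m as [|m IH]; intros Hm z Hz; [lia|].
  destruct (Nat.eq_dec m 0) as [->|Hm0].
  - exists O. split; [lia|]. rewrite dyad_0. auto.
  - destruct (Rle_dec z (dyad n m)).
    + destruct (IH ltac:(lia) z ltac:(lra)) as [j [Hj Hj']]. exists j. split; auto.
    + exists m. split; [lia | lra].
Qed.

Definition cell_min n j := hmin (dyad n j) (dyad n (S j)).
Definition cell_max n j := hmax (dyad n j) (dyad n (S j)).

(* [cover_len n a b] is the integral over the levels c in [a, b] of the number of level-n
   dyadic cells whose h-range contains c, a discrete Banach indicatrix: it increases with n
   and is bounded by the variation P q - P p. *)
Definition cover_len n a b :=
  sum_n_m (fun j => overlap (cell_min n j) (cell_max n j) a b) 0 (Nat.pred (2 ^ n)).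

Lemma pow2_pos n : (1 <= 2 ^ n)%nat.
Proof. pose proof (Nat.pow_nonzero 2 n). lia. Qed.

Lemma cell_refine n j a b : (j < 2 ^ n)%nat ->
  overlap (cell_min n j) (cell_max n j) a b <=
  overlap (cell_min (S n) (2 * j)) (cell_max (S n) (2 * j)) a b +
  overlap (cell_min (S n) (S (2 * j))) (cell_max (S n) (S (2 * j))) a b.
Proof.
  intros Hj. unfold cell_min, cell_max.
  replace (S (S (2 * j))) with (2 * S j)%nat by lia. rewrite !dyad_double.
  pose proof (dyad_monotone (S n) (2 * j) (S (2 * j)) ltac:(lia)) as M1.
  pose proof (dyad_monotone (S n) (S (2 * j)) (2 * S j) ltac:(lia)) as M2.
  pose proof (dyad_in n j ltac:(lia)). pose proof (dyad_in n (S j) ltac:(lia)).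
  rewrite !dyad_double in M1, M2.
  set (mid := dyad (S n) (S (2 * j))) in *. set (l := dyad n j) in *. set (r := dyad n (S j)) in *.
  pose proof (hmin_le l mid mid ltac:(lra) ltac:(lra) ltac:(lra) ltac:(lra)).
  pose proof (hmin_le mid r mid ltac:(lra) ltac:(lra) ltac:(lra) ltac:(lra)).
  pose proof (hmax_ge l mid mid ltac:(lra) ltac:(lra) ltac:(lra) ltac:(lra)).
  pose proof (hmax_ge mid r mid ltac:(lra) ltac:(lra) ltac:(lra) ltac:(lra)).
  apply overlap_union; try (apply hmin_le_hmax; lra).
  - unfold Rmax, Rmin; repeat destruct Rle_dec; lra.
  - apply hmin_ge; try lra. intros x Hx. destruct (Rle_dec x mid).
    + pose proof (hmin_le l mid x ltac:(lra) ltac:(lra) ltac:(lra) ltac:(lra)).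
      pose proof (Rmin_l (hmin l mid) (hmin mid r)). lra.
    + pose proof (hmin_le mid r x ltac:(lra) ltac:(lra) ltac:(lra) ltac:(lra)).
      pose proof (Rmin_r (hmin l mid) (hmin mid r)). lra.
  - apply hmax_le; try lra. intros x Hx. destruct (Rle_dec x mid).
    + pose proof (hmax_ge l mid x ltac:(lra) ltac:(lra) ltac:(lra) ltac:(lra)).
      pose proof (Rmax_l (hmax l mid) (hmax mid r)). lra.
    + pose proof (hmax_ge mid r x ltac:(lra) ltac:(lra) ltac:(lra) ltac:(lra)).
      pose proof (Rmax_r (hmax l mid) (hmax mid r)). lra.
Qed.

Lemma cover_len_succ n a b : cover_len n a b <= cover_len (S n) a b.
Proof.
  unfold cover_len. pose proof (pow2_pos n).
  replace (Nat.pred (2 ^ S n)) with (S (2 * Nat.pred (2 ^ n))) by (simpl; lia).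
  rewrite sum_n_m_pairs. apply sum_n_m_le_loc. intros j Hj. apply cell_refine. lia.
Qed.

Lemma cover_len_monotone n m a b : (n <= m)%nat -> cover_len n a b <= cover_len m a b.
Proof. induction 1; [lra|]. pose proof (cover_len_succ m a b). lra. Qed.

Lemma cover_len_split n a b c : a <= b <= c -> cover_len n a c = cover_len n a b + cover_len n b c.
Proof.
  intros H. unfold cover_len. rewrite <- (sum_n_m_plus (G := R_AbelianMonoid)).
  apply sum_n_m_ext_loc. intros. apply overlap_split; lra.
Qed.

Lemma cover_len_nonneg n a b : 0 <= cover_len n a b.
Proof. apply sum_n_m_nonneg. intros; apply overlap_nonneg. Qed.

Lemma cover_len_point n a : cover_len n a a = 0.
Proof.
  unfold cover_len. rewrite (sum_n_m_ext_loc _ (fun _ => zero)).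
  - apply (sum_n_m_const_zero (G := R_AbelianMonoid)).
  - intros; apply overlap_point.
Qed.

Lemma cover_len_le_variation n a b : cover_len n a b <= P q - P p.
Proof.
  unfold cover_len. pose proof (pow2_pos n). eapply Rle_trans.
  - apply (sum_n_m_le_loc _ (fun j => P (dyad n (S j)) - P (dyad n j))).
    intros j Hj. pose proof (dyad_monotone n j (S j) ltac:(lia)).
    pose proof (dyad_in n j ltac:(lia)). pose proof (dyad_in n (S j) ltac:(lia)).
    eapply Rle_trans; [apply overlap_le_length, hmin_le_hmax; lra|].
    apply hmax_sub_hmin; lra.
  - rewrite (sum_n_m_telescope (fun j => P (dyad n j))).
    replace (S (Nat.pred (2 ^ n))) with (2 ^ n)%nat by lia. rewrite dyad_top, dyad_0. lra.
Qed.


Definition density_le (K a b : R) := forall n, cover_len n a b <= K * (b - a).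

Lemma density_eventually_gt K a x : a <= x -> ~ (a < x /\ density_le K a x) ->
  exists n1, forall n, (n1 <= n)%nat ->
    K * (x - a) <= cover_len n a x /\ (a < x -> K * (x - a) < cover_len n a x).
Proof.
  intros Hax Hn. destruct (Req_dec a x) as [<-|Hne].
  - exists O. intros n _. rewrite cover_len_point. split; lra.
  - assert (~ density_le K a x) as Hnd by (intro; apply Hn; split; auto; lra).
    apply not_all_ex_not in Hnd as [n1 Hn1]. apply Rnot_le_lt in Hn1.
    exists n1. intros n Hn1n. pose proof (cover_len_monotone n1 n a x Hn1n). split; intros; lra.
Qed.

Lemma density_split K eps a x1 x2 b : 0 <= K -> 0 < eps -> a <= x1 -> x1 <= x2 -> x2 <= b ->
  a < b -> (x2 - x1) * (K + eps) < eps * (b - a) -> density_le K a b ->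
  (a < x1 /\ density_le (K + eps) a x1) \/ (x2 < b /\ density_le (K + eps) x2 b).
Proof.
  intros HK He H1 H2 H3 Hab Hsmall Hall.
  apply NNPP; intro Hn. apply not_or_and in Hn as [HA HC].
  destruct (density_eventually_gt (K + eps) a x1 H1 HA) as [n1 FA].
  destruct (density_eventually_gt (K + eps) x2 b H3 HC) as [n2 FC].
  destruct (FA (n1 + n2)%nat ltac:(lia)) as [A1 A2].
  destruct (FC (n1 + n2)%nat ltac:(lia)) as [C1 C2].
  specialize (Hall (n1 + n2)%nat).
  rewrite (cover_len_split _ a x1 b), (cover_len_split _ x1 x2 b) in Hall by lra.
  pose proof (cover_len_nonneg (n1 + n2) x1 x2).
  assert (x2 - x1 < b - a) by nra.
  destruct (Rlt_le_dec a x1) as [Hlt|Hle].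
  - specialize (A2 Hlt). nra.
  - specialize (C2 ltac:(lra)). nra.
Qed.

Lemma density_avoid K eps a b e : 0 <= K -> 0 < eps -> a < b -> density_le K a b ->
  exists a' b', a <= a' /\ a' < b' /\ b' <= b /\ ~ (a' <= e <= b') /\
    density_le (K + eps) a' b'.
Proof.
  intros HK He Hab Hall.
  destruct (classic (a <= e <= b)) as [Hin|Hout].
  - set (r := eps * (b - a) / (4 * (K + eps))).
    assert (Hr : 0 < r) by (unfold r; apply Rdiv_lt_0_compat; nra).
    assert (Hr2 : 2 * r * (K + eps) < eps * (b - a)) by (unfold r; field_simplify; nra).
    set (x1 := Rmax a (e - r)). set (x2 := Rmin b (e + r)).
    assert (a <= x1 <= e) by (unfold x1, Rmax; destruct Rle_dec; lra).
    assert (e <= x2 <= b) by (unfold x2, Rmin; destruct Rle_dec; lra).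
    assert (x2 - x1 <= 2 * r) by (unfold x1, x2, Rmax, Rmin; repeat destruct Rle_dec; lra).
    destruct (density_split K eps a x1 x2 b HK He ltac:(lra) ltac:(lra) ltac:(lra) Hab
                ltac:(nra) Hall) as [[HA1 HA2] | [HC1 HC2]].
    + exists a, x1. repeat split; try lra; auto. intros Hc.
      assert (x1 = e - r) by (unfold x1, Rmax in *; destruct Rle_dec; lra). lra.
    + exists x2, b. repeat split; try lra; auto. intros Hc.
      assert (x2 = e + r) by (unfold x2, Rmin in *; destruct Rle_dec; lra). lra.
  - exists a, b. repeat split; try lra; auto. intros n. specialize (Hall n). nra.
Qed.

Lemma density_halve K eps a b : 0 <= K -> 0 < eps -> a < b -> density_le K a b ->
  exists a' b', a <= a' /\ a' < b' /\ b' <= b /\ b' - a' <= (b - a) / 2 /\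
    density_le (K + eps) a' b'.
Proof.
  intros HK He Hab Hall.
  destruct (density_split K eps a ((a + b) / 2) ((a + b) / 2) b HK He ltac:(lra) ltac:(lra)
              ltac:(lra) Hab ltac:(nra) Hall) as [[HA1 HA2] | [HC1 HC2]].
  - exists a, ((a + b) / 2). repeat split; auto; lra.
  - exists ((a + b) / 2), b. repeat split; auto; lra.
Qed.

Lemma density_refine K eps a b e1 e2 : 0 <= K -> 0 < eps -> a < b -> density_le K a b ->
  exists a' b', a <= a' /\ a' < b' /\ b' <= b /\ b' - a' <= (b - a) / 2 /\
    ~ (a' <= e1 <= b') /\ ~ (a' <= e2 <= b') /\ density_le (K + 3 * eps) a' b'.
Proof.
  intros HK He Hab Hall.
  destruct (density_avoid K eps a b e1 HK He Hab Hall) as [a1 [b1 [A1 [A2 [A3 [A4 G1]]]]]].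
  destruct (density_avoid (K + eps) eps a1 b1 e2 ltac:(lra) He ltac:(lra) G1)
    as [a2 [b2 [B1 [B2 [B3 [B4 G2]]]]]].
  destruct (density_halve (K + eps + eps) eps a2 b2 ltac:(lra) He ltac:(lra) G2)
    as [a3 [b3 [C1 [C2 [C3 [C4 G3]]]]]].
  exists a3, b3. do 4 (split; [lra|]).
  split; [intro; apply A4; lra|]. split; [intro; apply B4; lra|].
  intros n. replace (K + 3 * eps) with (K + eps + eps + eps) by ring. apply G3.
Qed.

Lemma density_refine_step K0 a0 b0 s a b e1 e2 : 0 <= K0 -> a < b ->
  b - a <= (b0 - a0) / 2 ^ s -> density_le (K0 + 6 - 6 * (1 / 2) ^ s) a b ->
  exists a' b', a <= a' /\ a' < b' /\ b' <= b /\ b' - a' <= (b0 - a0) / 2 ^ S s /\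
    ~ (a' <= e1 <= b') /\ ~ (a' <= e2 <= b') /\ density_le (K0 + 6 - 6 * (1 / 2) ^ S s) a' b'.
Proof.
  intros HK0 Hab Hlen Hdens.
  assert (0 < (1 / 2) ^ s) by (apply pow_lt; lra).
  assert ((1 / 2) ^ s <= 1)
    by (destruct s; [simpl; lra | left; apply (pow_lt_1_compat (1 / 2)); [lra | lia]]).
  assert (0 < 2 ^ s) by (apply pow_lt; lra).
  destruct (density_refine (K0 + 6 - 6 * (1 / 2) ^ s) ((1 / 2) ^ S s) a b e1 e2
              ltac:(lra) ltac:(apply pow_lt; lra) Hab Hdens)
    as [a' [b' [G1 [G2 [G3 [G4 [G5 [G6 G7]]]]]]]].
  exists a', b'. do 3 (split; [auto|]). split; [|split; [auto | split; [auto|]]].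
  - simpl pow. replace ((b0 - a0) / (2 * 2 ^ s)) with ((b0 - a0) / 2 ^ s / 2) by (field; lra).
    lra.
  - intros n. eapply Rle_trans; [apply G7|]. simpl pow. apply Rmult_le_compat_r; lra.
Qed.

(* Nested intervals of levels; step s avoids both range endpoints of the cell with Cantor
   index s, and the average of the indicatrix over the interval stays below K0 + 6. *)
Lemma generic_point a0 b0 : a0 < b0 -> exists c K, a0 <= c <= b0 /\
  (forall n j, c <> cell_min n j /\ c <> cell_max n j) /\
  forall delta, 0 < delta -> exists a b, a < b /\ c - delta < a /\ a <= c <= b /\
    b < c + delta /\ density_le K a b.
Proof.
  intros Hab.
  set (K0 := (P q - P p) / (b0 - a0)).
  assert (HK0 : 0 <= K0)
    by (apply Rdiv_le_0_compat; [pose proof (P_monotone p q); lra | lra]).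
  set (Inv := fun s a b => a0 <= a /\ a < b /\ b <= b0 /\ b - a <= (b0 - a0) / 2 ^ s /\
       density_le (K0 + 6 - 6 * (1 / 2) ^ s) a b).
  set (e1 := fun s => cell_min (fst (Cantor.of_nat s)) (snd (Cantor.of_nat s))).
  set (e2 := fun s => cell_max (fst (Cantor.of_nat s)) (snd (Cantor.of_nat s))).
  set (Step := fun s a b a' b' =>
         a <= a' /\ b' <= b /\ ~ (a' <= e1 s <= b') /\ ~ (a' <= e2 s <= b')).
  assert (I0 : Inv O a0 b0).
  { repeat split; simpl; try lra. intros n. pose proof (cover_len_le_variation n a0 b0).
    replace ((K0 + 6 - 6 * 1) * (b0 - a0)) with (P q - P p) by (unfold K0; field; lra). auto. }
  assert (IS : forall s a b, Inv s a b -> exists a' b', Inv (S s) a' b' /\ Step s a b a' b').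
  { intros s a b [H1 [H2 [H3 [H4 H5]]]].
    destruct (density_refine_step K0 a0 b0 s a b (e1 s) (e2 s) HK0 H2 H4 H5)
      as [a' [b' [G1 [G2 [G3 [G4 [G5 [G6 G7]]]]]]]].
    exists a', b'. split; [repeat split; auto; lra | repeat split; auto]. }
  destruct (dependent_choice_pairs Inv Step a0 b0 I0 IS) as [A [B HAB]].
  destruct (nested_intervals_point A B) as [c Hc].
  { intros s. apply (HAB s). } { intros s. apply (HAB s). }
  { intros s. destruct (HAB s) as [[_ [? _]] _]. lra. }
  exists c, (K0 + 6). split; [|split].
  - destruct (HAB O) as [[? [_ [? _]]] _]. specialize (Hc O). lra.
  - intros n j. set (s := Cantor.to_nat (n, j)).
    destruct (HAB s) as [_ [_ [_ [G1 G2]]]]. unfold e1, e2 in G1, G2.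
    assert (Es : Cantor.of_nat s = (n, j)) by apply Cantor.cancel_of_to.
    rewrite Es in G1, G2. cbn [fst snd] in G1, G2.
    specialize (Hc (S s)). split; intro E; [apply G1 | apply G2]; rewrite <- E; lra.
  - intros delta Hd. destruct (dyadic_small (b0 - a0) delta Hd) as [s Hs].
    destruct (HAB s) as [[_ [H2 [_ [H4 H5]]]] _]. specialize (Hc s).
    exists (A s), (B s). repeat split; try lra.
    intros n. eapply Rle_trans; [apply H5|].
    assert (0 < (1 / 2) ^ s) by (apply pow_lt; lra). apply Rmult_le_compat_r; lra.
Qed.

Definition cell_of n z :=
  epsilon (inhabits O) (fun j => (j < 2 ^ n)%nat /\ dyad n j <= z <= dyad n (S j)).

Lemma cell_of_spec n z : p <= z <= q ->
  (cell_of n z < 2 ^ n)%nat /\ dyad n (cell_of n z) <= z <= dyad n (S (cell_of n z)).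
Proof.
  intros Hz. unfold cell_of. apply epsilon_spec.
  apply dyad_cell_exists; [apply pow2_pos | rewrite dyad_top; auto].
Qed.

Lemma cell_of_lt n z z' : p <= z <= q -> p <= z' <= q -> (q - p) / 2 ^ n < z' - z ->
  (cell_of n z < cell_of n z')%nat.
Proof.
  intros Hz Hz' Hgap.
  destruct (cell_of_spec n z Hz) as [_ J]. destruct (cell_of_spec n z' Hz') as [_ J'].
  destruct (Nat.lt_ge_cases (cell_of n z) (cell_of n z')) as [|Hle]; auto. exfalso.
  pose proof (dyad_monotone n (S (cell_of n z')) (S (cell_of n z)) ltac:(lia)) as M.
  rewrite (dyad_succ n (cell_of n z)) in M. lra.
Qed.

Lemma cell_of_sorted n zs : Forall (fun z => p <= z <= q) zs ->
  StronglySorted (fun x y => (q - p) / 2 ^ n < y - x) zs -> StronglySorted lt (map (cell_of n) zs).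
Proof.
  intros Hin Hs. induction Hs as [|z zs Hs IH Hz]; simpl; constructor.
  - inversion Hin; auto.
  - inversion Hin as [|? ? Hz0 Hin']; subst. rewrite Forall_forall in *. intros j Hj.
    apply in_map_iff in Hj as [z' [<- Hz']]. apply cell_of_lt; auto.
Qed.

Lemma level_list_length_le c K : (forall n j, c <> cell_min n j /\ c <> cell_max n j) ->
  (forall delta, 0 < delta -> exists a b, a < b /\ c - delta < a /\ a <= c <= b /\
     b < c + delta /\ density_le K a b) ->
  forall zs, Forall (fun z => p <= z <= q /\ h z = c) zs -> StronglySorted Rlt zs ->
  INR (length zs) <= K.
Proof.
  intros Havoid Hshrink zs Hz Hs.
  assert (Hin : Forall (fun z => p <= z <= q) zs)
    by (eapply Forall_impl; [|exact Hz]; intros z [Hzpq _]; exact Hzpq).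
  destruct (sorted_gaps_dyadic (q - p) zs ltac:(lra) Hs) as [n Hgap].
  set (js := map (cell_of n) zs).
  assert (Hjs : Forall (fun j => (j < 2 ^ n)%nat /\ cell_min n j < c < cell_max n j) js).
  { apply Forall_map. eapply Forall_impl; [|exact Hz]. intros z [Hzpq Hhz].
    destruct (cell_of_spec n z Hzpq) as [Hj Hzj]. set (j := cell_of n z) in *.
    pose proof (dyad_in n j ltac:(lia)). pose proof (dyad_in n (S j) ltac:(lia)).
    pose proof (hmin_le (dyad n j) (dyad n (S j)) z ltac:(lra) ltac:(lra) ltac:(lra) Hzj) as Hmin.
    pose proof (hmax_ge (dyad n j) (dyad n (S j)) z ltac:(lra) ltac:(lra) ltac:(lra) Hzj) as Hmax.
    destruct (Havoid n j). unfold cell_min, cell_max in *. rewrite Hhz in *.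
    split; [auto | split].
    - destruct (Rle_lt_or_eq _ _ Hmin) as [|E]; [auto | congruence].
    - destruct (Rle_lt_or_eq _ _ Hmax) as [|E]; [auto | congruence]. }
  destruct (list_min_pos (fun j => Rmin (c - cell_min n j) (cell_max n j - c)) js)
    as [delta [Hd Hjd]].
  { eapply Forall_impl; [|exact Hjs]. intros j [_ Hj]. apply Rmin_pos; lra. }
  destruct (Hshrink delta Hd) as [a [b [Hab [Ha [Hc [Hb Hdens]]]]]].
  assert (Hcount : INR (length js) * (b - a) <= cover_len n a b).
  { apply sum_n_m_ge_count; [intros; apply overlap_nonneg | apply cell_of_sorted; auto |].
    rewrite Forall_forall in *. intros j Hj. destruct (Hjs j Hj) as [Hj2 _].
    specialize (Hjd j Hj). cbv beta in Hjd.
    pose proof (Rmin_l (c - cell_min n j) (cell_max n j - c)).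
    pose proof (Rmin_r (c - cell_min n j) (cell_max n j - c)).
    split; [lia | rewrite overlap_full; lra]. }
  specialize (Hdens n). unfold js in Hcount. rewrite length_map in Hcount.
  apply Rmult_le_reg_r with (r := b - a); lra.
Qed.

Lemma generic_level a0 b0 : a0 < b0 -> exists c, a0 <= c <= b0 /\ exists N : nat, forall zs,
  Forall (fun z => p <= z <= q /\ h z = c) zs -> StronglySorted Rlt zs -> (length zs <= N)%nat.
Proof.
  intros Hab. destruct (generic_point a0 b0 Hab) as [c [K [Hc [Havoid Hshrink]]]].
  destruct (nat_above K) as [N HN]. exists c. split; auto. exists N. intros zs Hz Hs.
  apply INR_le. pose proof (level_list_length_le c K Havoid Hshrink zs Hz Hs). lra.
Qed.

End GenericLevel.

(** * The class D, sign switches and alternating points *)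

Lemma inD_props f : inD f ->
  cont_on f 0 1 /\ (forall x, 0 <= x <= 1 -> 0 <= f x <= 1) /\
  (forall x y, 0 <= x -> x <= y -> y <= 1 -> f y <= f x) /\ (forall x, 0 <= x < 1 -> 0 < f x).
Proof.
  intros [H1 [H2 [H3 [H4 H5]]]]. split; [exact H1|]. split; auto. split.
  - intros x y Hx Hxy Hy. destruct (Rle_lt_or_eq _ _ Hxy) as [|<-]; [left; auto | lra].
  - intros x Hx. rewrite <- H5. apply H3; lra.
Qed.

Lemma inD_0 f : inD f -> f 0 = 1.
Proof. intros [_ [_ [_ [H _]]]]; exact H. Qed.

Lemma inD_1 f : inD f -> f 1 = 0.
Proof. intros [_ [_ [_ [_ H]]]]; exact H. Qed.

Lemma inD_lt f x y : inD f -> 0 <= x -> x < y -> y <= 1 -> f y < f x.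
Proof. intros [_ [_ [H _]]]; apply H. Qed.

Lemma inD_le_rev f x y : inD f -> 0 <= x <= 1 -> 0 <= y <= 1 -> f x <= f y -> y <= x.
Proof.
  intros Hf Hx Hy Hxy. apply Rnot_lt_le. intro H.
  pose proof (inD_lt f x y Hf ltac:(lra) H ltac:(lra)). lra.
Qed.

Lemma inD_lt_rev f x y : inD f -> 0 <= x <= 1 -> 0 <= y <= 1 -> f x < f y -> y < x.
Proof.
  intros Hf Hx Hy Hxy. destruct (Rtotal_order y x) as [|[->|H]]; [auto | lra|].
  pose proof (inD_lt f x y Hf ltac:(lra) H ltac:(lra)). lra.
Qed.

Lemma inD_inj f x y : inD f -> 0 <= x <= 1 -> 0 <= y <= 1 -> f x = f y -> x = y.
Proof.
  intros Hf Hx Hy E. apply Rle_antisym; apply (inD_le_rev f); auto; lra.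
Qed.

Definition diff_ab (F G : R -> R) (a b : R) : R -> R := fun x => F (a * x) - b * G x.

Lemma diff_ab_at_0 F G a b : inD F -> inD G -> diff_ab F G a b 0 = 1 - b.
Proof.
  intros [_ [_ [_ [F0 _]]]] [_ [_ [_ [G0 _]]]]. unfold diff_ab. rewrite Rmult_0_r, F0, G0. ring.
Qed.

Lemma diff_ab_at_1 F G a b : inD G -> diff_ab F G a b 1 = F a.
Proof. intros [_ [_ [_ [_ G1]]]]. unfold diff_ab. rewrite Rmult_1_r, G1. ring. Qed.

Lemma diff_ab_at_inv F G a b : inD F -> 0 < a -> diff_ab F G a b (/ a) = - (b * G (/ a)).
Proof.
  intros [_ [_ [_ [_ F1]]]] Ha. unfold diff_ab. rewrite Rinv_r, F1 by lra. ring.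
Qed.

Lemma window_bounds a : 0 < a -> 0 < Rmin 1 (/ a) /\ Rmin 1 (/ a) <= 1 /\ a * Rmin 1 (/ a) <= 1.
Proof.
  intros Ha. split; [apply Rmin_pos; [lra | apply Rinv_0_lt_compat; auto]|]. split; [apply Rmin_l|].
  pose proof (Rmin_r 1 (/ a)) as Hr. apply Rmult_le_compat_l with (r := a) in Hr; [|lra].
  rewrite Rinv_r in Hr; lra.
Qed.

Lemma window_scaled a x : 0 < a -> 0 <= x <= Rmin 1 (/ a) -> 0 <= a * x <= 1 /\ x <= 1.
Proof.
  intros Ha Hx. destruct (window_bounds a Ha) as [_ [H1 H2]].
  assert (a * x <= a * Rmin 1 (/ a)) by (apply Rmult_le_compat_l; lra).
  split; [split; [apply Rmult_le_pos|]|]; lra.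
Qed.

Lemma cont_on_diff_ab F G a c : inD F -> inD G -> 0 < a ->
  cont_on (diff_ab F G a c) 0 (Rmin 1 (/ a)).
Proof.
  intros HF HG Ha. destruct (window_bounds a Ha) as [_ [HL HaL]]. apply cont_on_minus_scal.
  - apply cont_on_comp_scal; auto. eapply cont_on_subinterval; [apply (proj1 HF) | lra | auto].
  - eapply cont_on_subinterval; [apply (proj1 HG) | lra | auto].
Qed.

Lemma cont_on_diff_ab_1 F G b : inD F -> inD G -> cont_on (diff_ab F G 1 b) 0 1.
Proof.
  intros HF HG. pose proof (cont_on_diff_ab F G 1 b HF HG ltac:(lra)) as Hc.
  rewrite Rinv_1, Rmin_left in Hc by lra. exact Hc.
Qed.

Definition alternating (D : R -> R) (L : R) (k : nat) (pt : nat -> R) : Prop :=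
  0 < pt O /\ pt k < L /\ (forall i, (i < k)%nat -> pt i < pt (S i)) /\
  (forall i, (i < k)%nat -> D (pt i) * D (pt (S i)) < 0).

Lemma chain_le (pt : nat -> R) k : (forall i, (i < k)%nat -> pt i < pt (S i)) ->
  forall i j, (i <= j <= k)%nat -> pt i <= pt j.
Proof.
  intros H i j [H1 H2]. induction H1 as [|j H1 IH]; [lra|].
  specialize (H j ltac:(lia)). specialize (IH ltac:(lia)). lra.
Qed.

Lemma chain_lt (pt : nat -> R) k : (forall i, (i < k)%nat -> pt i < pt (S i)) ->
  forall i j, (i < j <= k)%nat -> pt i < pt j.
Proof.
  intros H i j Hij. pose proof (chain_le pt k H (S i) j ltac:(lia)).
  specialize (H i ltac:(lia)). lra.
Qed.

Lemma alternating_in D L k pt : alternating D L k pt -> forall i, (i <= k)%nat -> 0 < pt i < L.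
Proof.
  intros [H0 [Hk [Hinc _]]] i Hi.
  pose proof (chain_le pt k Hinc O i ltac:(lia)). pose proof (chain_le pt k Hinc i k ltac:(lia)).
  lra.
Qed.

Lemma alternating_nonzero D L k pt : (1 <= k)%nat -> alternating D L k pt ->
  forall i, (i <= k)%nat -> D (pt i) <> 0.
Proof.
  intros Hk [_ [_ [_ Halt]]] i Hi E. destruct (Nat.eq_dec i k) as [->|].
  - specialize (Halt (Nat.pred k) ltac:(lia)). replace (S (Nat.pred k)) with k in Halt by lia.
    rewrite E in Halt. lra.
  - specialize (Halt i ltac:(lia)). rewrite E in Halt. lra.
Qed.

Lemma alternating_ext (D1 D2 : R -> R) L k pt : (forall x, 0 < x < L -> D1 x = D2 x) ->
  alternating D1 L k pt -> alternating D2 L k pt.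
Proof.
  intros E HA. pose proof (alternating_in _ _ _ _ HA) as Hin. destruct HA as [H0 [Hk [Hinc Halt]]].
  do 3 (split; auto). intros i Hi. rewrite <- !E by (apply Hin; lia). auto.
Qed.

Definition four_points (a b c d : R) (i : nat) : R :=
  match i with O => a | 1%nat => b | 2%nat => c | _ => d end.

Lemma alternating_four (D : R -> R) L a b c d : 0 < a -> a < b -> b < c -> c < d -> d < L ->
  D a * D b < 0 -> D b * D c < 0 -> D c * D d < 0 -> alternating D L 3 (four_points a b c d).
Proof.
  intros. do 2 (split; auto). split; intros i Hi; destruct i as [|[|[|i]]]; simpl; auto; lia.
Qed.

Lemma alternating_three (D : R -> R) L a b c : 0 < a -> a < b -> b < c -> c < L ->
  D a * D b < 0 -> D b * D c < 0 -> alternating D L 2 (four_points a b c c).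
Proof.
  intros. do 2 (split; auto). split; intros i Hi; destruct i as [|[|i]]; simpl; auto; lia.
Qed.

Lemma sign_switch_intro (D : R -> R) c0 d0 c d del : c0 < c -> c <= d -> d < d0 ->
  (forall x, c <= x <= d -> D x = 0) -> 0 < del ->
  (forall x, 0 < x <= del -> D (c - x) * D (d + x) < 0) -> sign_switch D c0 d0 c d.
Proof.
  intros H1 H2 H3 Hz Hd H. do 4 (split; auto).
  exists (Rmin del (Rmin (c - c0) (d0 - d))). split; [apply Rmin_pos; auto; apply Rmin_pos; lra|].
  split; [apply Rmin_r|]. intros x Hx. apply H. pose proof (Rmin_l del (Rmin (c - c0) (d0 - d))).
  lra.
Qed.

Lemma sign_switch_at_crossing D c0 d0 u v N : c0 <= u -> u < v -> v <= d0 -> cont_on D u v ->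
  D u * D v < 0 -> (forall zs, root_list D u v zs -> (length zs <= N)%nat) ->
  exists z, u < z < v /\ sign_switch D c0 d0 z z.
Proof.
  intros Hu Huv Hv Hc Hs Hb.
  destruct (Rlt_le_dec 0 (D u)) as [Pos|Neg].
  - destruct (isolated_down_crossing N u v D Huv Hc Pos ltac:(nra) Hb)
      as [z [eta [Hz [Hz0 [He H]]]]].
    exists z. split; auto. apply (sign_switch_intro D c0 d0 z z eta); try lra.
    + intros x Hx. replace x with z by lra. auto.
    + intros x Hx. destruct (H x Hx). nra.
  - assert (Hneg : D u < 0)
      by (destruct (Rle_lt_or_eq _ _ Neg) as [|E]; [auto | rewrite E in Hs; lra]).
    destruct (isolated_down_crossing N u v (fun x => - D x) Huv (cont_on_opp _ _ _ Hc)
                ltac:(cbv beta; lra) ltac:(cbv beta; nra)) as [z [eta [Hz [Hz0 [He H]]]]].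
    { intros zs [HF HS]. apply Hb. split; auto. eapply Forall_impl; [|exact HF].
      intros z [Hz Hz0]. split; auto; lra. }
    exists z. split; auto. apply (sign_switch_intro D c0 d0 z z eta); try lra.
    + intros x Hx. replace x with z by lra. lra.
    + intros x Hx. destruct (H x Hx). nra.
Qed.

Lemma chi_ge_of_separated_switches D c0 d0 k (pt : nat -> R) :
  (forall i, (i < k)%nat -> pt i < pt (S i)) ->
  (forall i, (i < k)%nat -> exists z, pt i < z < pt (S i) /\ sign_switch D c0 d0 z z) ->
  chi_ge D c0 d0 k.
Proof.
  intros Hinc Hsw.
  set (zf := fun i =>
         epsilon (inhabits 0) (fun z => pt i < z < pt (S i) /\ sign_switch D c0 d0 z z)).
  assert (Hzf : forall i, (i < k)%nat ->
            pt i < zf i < pt (S i) /\ sign_switch D c0 d0 (zf i) (zf i))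
    by (intros i Hi; apply epsilon_spec, Hsw, Hi).
  exists (map (fun i => (zf i, zf i)) (seq 0 k)). split; [|split].
  - apply NoDup_map_NoDup_ForallPairs; [|apply seq_NoDup].
    intros i j Hi Hj E. apply in_seq in Hi, Hj. injection E as E.
    destruct (Hzf i ltac:(lia)) as [Zi _]. destruct (Hzf j ltac:(lia)) as [Zj _].
    destruct (Nat.lt_total i j) as [Hlt|[Heq|Hgt]]; auto.
    + pose proof (chain_le pt k Hinc (S i) j ltac:(lia)). lra.
    + pose proof (chain_le pt k Hinc (S j) i ltac:(lia)). lra.
  - rewrite length_map, length_seq. reflexivity.
  - apply Forall_forall. intros [x y] Hxy. apply in_map_iff in Hxy as [i [E Hi]].
    injection E as <- <-. apply in_seq in Hi. apply Hzf. lia.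
Qed.

Lemma chi_ge_of_alternating D L k pt N : cont_on D 0 L -> alternating D L k pt ->
  (forall i, (i < k)%nat -> forall zs, root_list D (pt i) (pt (S i)) zs -> (length zs <= N)%nat) ->
  chi_ge D 0 L k.
Proof.
  intros Hc HA Hb. pose proof (alternating_in _ _ _ _ HA) as Hin.
  destruct HA as [_ [_ [Hinc Halt]]].
  apply (chi_ge_of_separated_switches D 0 L k pt Hinc). intros i Hi.
  pose proof (Hin i ltac:(lia)). pose proof (Hin (S i) ltac:(lia)).
  apply (sign_switch_at_crossing D 0 L (pt i) (pt (S i)) N); try lra.
  - apply Hinc, Hi.
  - eapply cont_on_subinterval; [exact Hc | lra | lra].
  - apply Halt, Hi.
  - apply Hb, Hi.
Qed.

Lemma ratio_variation (u w : R -> R) (p q m : R) :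
  0 < m -> (forall x, p <= x <= q -> 0 <= u x <= 1 /\ m <= w x) ->
  (forall s t, p <= s -> s <= t -> t <= q -> u t <= u s /\ w t <= w s) ->
  forall s t, p <= s -> s <= t -> t <= q ->
  Rabs (u t / w t - u s / w s) <= (- u t / m - w t / (m * m)) - (- u s / m - w s / (m * m)).
Proof.
  intros Hm Hb Hmon s t Hs Hst Ht.
  destruct (Hb s ltac:(lra)) as [[Us1 Us2] Ws]. destruct (Hb t ltac:(lra)) as [[Ut1 Ut2] Wt].
  destruct (Hmon s t Hs Hst Ht) as [Hu Hw].
  assert (Hws : 0 < w s) by lra. assert (Hwt : 0 < w t) by lra.
  assert (A1 : u s / w s - u t / w t <= (u s - u t) / m).
  { apply Rle_trans with ((u s - u t) / w s).
    - unfold Rdiv. assert (/ w s <= / w t) by (apply Rinv_le_contravar; lra).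
      assert (u t * / w s <= u t * / w t) by (apply Rmult_le_compat_l; lra). nra.
    - unfold Rdiv. apply Rmult_le_compat_l; [lra|]. apply Rinv_le_contravar; lra. }
  assert (A2 : u t / w t - u s / w s <= (w s - w t) / (m * m)).
  { assert (E : u t / w t - u t / w s = u t * ((w s - w t) / (w s * w t))) by (field; lra).
    assert (u t * / w s <= u s * / w s)
      by (apply Rmult_le_compat_r; [left; apply Rinv_0_lt_compat; lra | lra]).
    assert (0 <= (w s - w t) / (w s * w t)) by (apply Rdiv_le_0_compat; nra).
    assert ((w s - w t) / (w s * w t) <= (w s - w t) / (m * m)).
    { unfold Rdiv. apply Rmult_le_compat_l; [lra|]. apply Rinv_le_contravar; [nra|].
      apply Rmult_le_compat; lra. }
    unfold Rdiv at 1 2 in E. nra. }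
  replace ((- u t / m - w t / (m * m)) - (- u s / m - w s / (m * m)))
    with ((u s - u t) / m + (w s - w t) / (m * m)) by (field; lra).
  assert (0 <= (u s - u t) / m) by (apply Rdiv_le_0_compat; lra).
  assert (0 <= (w s - w t) / (m * m)) by (apply Rdiv_le_0_compat; nra).
  unfold Rabs; destruct Rcase_abs; lra.
Qed.

Lemma alternating_of_same_signs (D1 D2 : R -> R) L L' k pt : alternating D1 L k pt -> pt k < L' ->
  (forall i, (i <= k)%nat -> 0 < D2 (pt i) * D1 (pt i)) -> alternating D2 L' k pt.
Proof.
  intros [H0 [_ [Hinc Halt]]] HL Hsame. do 3 (split; auto). intros i Hi.
  pose proof (Hsame i ltac:(lia)). pose proof (Hsame (S i) ltac:(lia)). specialize (Halt i Hi).
  nra.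
Qed.

Lemma diff_ab_sign_stable_in_b F G a b c x : 0 <= G x <= 1 ->
  2 * Rabs (c - b) <= Rabs (diff_ab F G a b x) -> diff_ab F G a b x <> 0 ->
  0 < diff_ab F G a c x * diff_ab F G a b x.
Proof.
  intros HGx Hclose Hnz.
  replace (diff_ab F G a c x) with (diff_ab F G a b x - (c - b) * G x) by (unfold diff_ab; ring).
  apply small_perturbation_keeps_sign; auto.
  rewrite Rabs_mult, (Rabs_right (G x)) by lra. pose proof (Rabs_pos (c - b)). nra.
Qed.

(* Roots of diff_ab F G a c are the points where F (a .) / G takes the value c; this ratio has
   bounded variation because numerator and denominator decrease and G stays away from 0. *)
Lemma diff_ab_level_finite F G a p q b0 b1 : inD F -> inD G -> 0 < a -> 0 <= p < q -> q < 1 ->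
  a * q <= 1 -> b0 < b1 -> exists c N, b0 <= c <= b1 /\
    forall u v zs, p <= u -> v <= q -> root_list (diff_ab F G a c) u v zs -> (length zs <= N)%nat.
Proof.
  intros HF HG Ha Hpq Hq Haq Hb.
  destruct (inD_props F HF) as [_ [Fb [Fm _]]]. destruct (inD_props G HG) as [_ [_ [Gm Gp]]].
  set (m := G q). assert (Hm : 0 < m) by (apply Gp; lra).
  set (h := fun x => F (a * x) / G x).
  set (P := fun x => - F (a * x) / m - G x / (m * m)).
  assert (Hvar : forall s t, p <= s -> s <= t -> t <= q -> Rabs (h t - h s) <= P t - P s).
  { apply (ratio_variation (fun x => F (a * x)) G p q m Hm).
    - intros x Hx. split; [apply Fb; split; nra | apply Gm; lra].
    - intros s t Hs Hst Ht. split; [apply Fm; nra | apply Gm; lra]. }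
  destruct (generic_level h P p q ltac:(lra) Hvar b0 b1 Hb) as [c [Hc [N HN]]].
  exists c, N. split; auto. intros u v zs Hu Hv [HZ HS]. apply HN; auto.
  eapply Forall_impl; [|exact HZ]. intros z [Hz Hz0]. assert (0 < G z) by (apply Gp; lra).
  split; [lra|]. unfold h, diff_ab in *. apply Rmult_eq_reg_r with (G z); [|lra].
  unfold Rdiv. rewrite Rmult_assoc, Rinv_l by lra. lra.
Qed.

Lemma chi_ge_of_alternating_diff_ab F G a b k pt : inD F -> inD G -> 0 < a -> 0 < b ->
  alternating (diff_ab F G a b) (Rmin 1 (/ a)) k pt ->
  exists c, 0 < c /\ chi_ge (diff_ab F G a c) 0 (Rmin 1 (/ a)) k.
Proof.
  intros HF HG Ha Hb HA.
  destruct k as [|k'].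
  { exists b. split; auto. exists nil. split; [constructor | split; [reflexivity | constructor]]. }
  set (k := S k') in *. set (L := Rmin 1 (/ a)) in *.
  pose proof (alternating_in _ _ _ _ HA) as Hin.
  pose proof (alternating_nonzero _ L k pt ltac:(unfold k; lia) HA) as Hnz.
  pose proof (chain_le pt k (proj1 (proj2 (proj2 HA)))) as Hchain.
  destruct (window_bounds a Ha) as [_ [HL1 HaL]]. fold L in HL1, HaL.
  pose proof (Hin O ltac:(lia)). pose proof (Hin k ltac:(lia)).
  pose proof (chain_lt pt k (proj1 (proj2 (proj2 HA))) O k ltac:(unfold k; lia)).
  destruct (window_scaled a (pt k) Ha ltac:(fold L; lra)) as [[_ Haq] _].
  destruct (points_min_pos (fun i => Rabs (diff_ab F G a b (pt i))) k) as [rho [Hrho Hrho']].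
  { intros i Hi. apply Rabs_pos_lt, Hnz, Hi. }
  pose proof (Rmin_l (rho / 2) (b / 2)). pose proof (Rmin_r (rho / 2) (b / 2)).
  set (r := Rmin (rho / 2) (b / 2)) in *. assert (Hr : 0 < r) by (apply Rmin_pos; lra).
  destruct (diff_ab_level_finite F G a (pt O) (pt k) (b - r) (b + r) HF HG Ha ltac:(lra)
              ltac:(fold L; lra) Haq ltac:(lra)) as [c [N [Hc HN]]].
  assert (HAc : alternating (diff_ab F G a c) L k pt).
  { apply (alternating_of_same_signs _ _ L L k pt HA); [lra|]. intros i Hi.
    specialize (Hin i Hi). specialize (Hrho' i Hi). cbv beta in Hrho'.
    apply diff_ab_sign_stable_in_b; [apply (proj1 (proj2 HG)); lra | | auto].
    assert (Rabs (c - b) <= r) by (unfold Rabs; destruct Rcase_abs; lra). lra. }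
  exists c. split; [lra|].
  apply (chi_ge_of_alternating _ L k pt N (cont_on_diff_ab F G a c HF HG Ha) HAc).
  intros i Hi zs Hzs. apply (HN (pt i) (pt (S i))); auto; apply Hchain; lia.
Qed.

Lemma sign_switch_ext D1 D2 c0 d0 c d : (forall x, c0 <= x <= d0 -> D1 x = D2 x) ->
  sign_switch D1 c0 d0 c d -> sign_switch D2 c0 d0 c d.
Proof.
  intros E [H1 [H2 [H3 [H4 [del [Hd1 [Hd2 Hd3]]]]]]].
  pose proof (Rmin_l (c - c0) (d0 - d)). pose proof (Rmin_r (c - c0) (d0 - d)).
  do 3 (split; auto). split.
  - intros x Hx. rewrite <- E by lra. auto.
  - exists del. do 2 (split; auto). intros x Hx. rewrite <- !E by lra. auto.
Qed.

Lemma chi_ge_ext D1 D2 c0 d0 n : (forall x, c0 <= x <= d0 -> D1 x = D2 x) ->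
  chi_ge D1 c0 d0 n -> chi_ge D2 c0 d0 n.
Proof.
  intros E [l [H1 [H2 H3]]]. exists l. do 2 (split; auto).
  eapply Forall_impl; [|exact H3]. intros [c d]. apply sign_switch_ext; auto.
Qed.

Lemma chi_ge_le D c0 d0 n m : chi_ge D c0 d0 n -> (m <= n)%nat -> chi_ge D c0 d0 m.
Proof.
  intros [l [Hnd [Hlen HF]]] Hmn. pose proof (firstn_skipn m l) as E.
  exists (firstn m l). split; [|split].
  - apply (NoDup_app_remove_r _ (skipn m l)). rewrite E. auto.
  - rewrite length_firstn. lia.
  - rewrite Forall_forall in *. intros x Hx. apply HF. rewrite <- E. apply in_or_app. auto.
Qed.

Lemma sign_chain A B C : 0 <= A * B -> B * C < 0 -> A <> 0 -> A * C < 0.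
Proof.
  intros H1 H2 HA. destruct (Rle_lt_or_eq _ _ H1) as [H|H]; [nra|].
  symmetry in H. apply Rmult_integral in H as [H|H]; [contradiction | rewrite H in H2; lra].
Qed.

Lemma sign_switch_points D c0 d0 c d : sign_switch D c0 d0 c d -> forall eps, 0 < eps ->
  exists x y, c0 < x < c /\ c - eps < x /\ d < y < d0 /\ y < d + eps /\ D x * D y < 0.
Proof.
  intros [H1 [H2 [H3 [H4 [del [Hd1 [Hd2 Hd3]]]]]]] eps He.
  pose proof (Rmin_l (c - c0) (d0 - d)). pose proof (Rmin_r (c - c0) (d0 - d)).
  pose proof (Rmin_l del eps). pose proof (Rmin_r del eps). pose proof (Rmin_pos del eps Hd1 He).
  exists (c - Rmin del eps / 2), (d + Rmin del eps / 2). repeat split; try lra. apply Hd3; lra.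
Qed.

Lemma sign_switches_ordered D c0 d0 c d c' d' : sign_switch D c0 d0 c d ->
  sign_switch D c0 d0 c' d' -> (c, d) <> (c', d') -> d < c' \/ d' < c.
Proof.
  intros S1 S2 Hne. apply NNPP; intro Hn. apply not_or_and in Hn as [N1 N2].
  assert (Hinside : forall c d c' d', sign_switch D c0 d0 c d -> sign_switch D c0 d0 c' d' ->
            c <= d' -> c' <= d -> c < c' -> False).
  { clear. intros c d c' d' [_ [_ [_ [A4 _]]]] [_ [_ [_ [_ [e' [Be1 [_ Be3]]]]]]] H1 H2 H3.
    specialize (Be3 (Rmin e' (c' - c)) ltac:(split; [apply Rmin_pos | apply Rmin_l]; lra)).
    rewrite (A4 (c' - Rmin e' (c' - c))) in Be3; [lra|].
    pose proof (Rmin_r e' (c' - c)). pose proof (Rmin_pos e' (c' - c) Be1 ltac:(lra)). lra. }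
  assert (Hinside' : forall c d c' d', sign_switch D c0 d0 c d -> sign_switch D c0 d0 c' d' ->
            c <= d' -> c' <= d -> d < d' -> False).
  { clear. intros c d c' d' [_ [_ [_ [_ [e [Ae1 [_ Ae3]]]]]]] [_ [_ [_ [B4 _]]]] H1 H2 H3.
    specialize (Ae3 (Rmin e (d' - d)) ltac:(split; [apply Rmin_pos | apply Rmin_l]; lra)).
    rewrite (B4 (d + Rmin e (d' - d))) in Ae3; [lra|].
    pose proof (Rmin_r e (d' - d)). pose proof (Rmin_pos e (d' - d) Ae1 ltac:(lra)).
    lra. }
  apply Hne. f_equal.
  - destruct (Rtotal_order c c') as [H|[H|H]]; auto; exfalso.
    + apply (Hinside c d c' d'); auto; lra.
    + apply (Hinside c' d' c d); auto; lra.
  - destruct (Rtotal_order d d') as [H|[H|H]]; auto; exfalso.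
    + apply (Hinside' c d c' d'); auto; lra.
    + apply (Hinside' c' d' c d); auto; lra.
Qed.

Lemma alternating_of_three_switches D L c1 d1 c2 d2 c3 d3 :
  sign_switch D 0 L c1 d1 -> sign_switch D 0 L c2 d2 -> sign_switch D 0 L c3 d3 ->
  d1 < c2 -> d2 < c3 -> exists pt, alternating D L 3 pt.
Proof.
  intros S1 S2 S3 H12 H23.
  set (eps := Rmin (c2 - d1) (c3 - d2) / 2).
  pose proof (Rmin_l (c2 - d1) (c3 - d2)). pose proof (Rmin_r (c2 - d1) (c3 - d2)).
  pose proof (Rmin_pos (c2 - d1) (c3 - d2) ltac:(lra) ltac:(lra)).
  assert (He : 0 < eps) by (unfold eps; lra).
  pose proof (proj1 (proj2 S1)). pose proof (proj1 (proj2 S2)). pose proof (proj1 (proj2 S3)).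
  destruct (sign_switch_points D 0 L c1 d1 S1 eps He) as [x1 [y1 [X1 [X1' [Y1 [Y1' P1]]]]]].
  destruct (sign_switch_points D 0 L c2 d2 S2 eps He) as [x2 [y2 [X2 [X2' [Y2 [Y2' P2]]]]]].
  destruct (sign_switch_points D 0 L c3 d3 S3 eps He) as [x3 [y3 [X3 [X3' [Y3 [Y3' P3]]]]]].
  unfold eps in *.
  assert (D y1 <> 0) by (intro E; rewrite E in P1; lra).
  assert (D y2 <> 0) by (intro E; rewrite E in P2; lra).
  destruct (Rlt_le_dec (D y1 * D x2) 0) as [Q1|Q1].
  - exists (four_points x1 y1 x2 y2). apply alternating_four; auto; lra.
  - pose proof (sign_chain _ _ _ Q1 P2 ltac:(auto)) as R1.
    destruct (Rlt_le_dec (D y2 * D x3) 0) as [Q2|Q2].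
    + exists (four_points x1 y1 y2 x3). apply alternating_four; auto; lra.
    + pose proof (sign_chain _ _ _ Q2 P3 ltac:(auto)) as R2.
      exists (four_points x1 y1 y2 y3). apply alternating_four; auto; lra.
Qed.

Lemma alternating_of_two_switches D L c1 d1 c2 d2 :
  sign_switch D 0 L c1 d1 -> sign_switch D 0 L c2 d2 -> d1 < c2 -> exists pt, alternating D L 2 pt.
Proof.
  intros S1 S2 H12.
  set (eps := (c2 - d1) / 2). assert (He : 0 < eps) by (unfold eps; lra).
  pose proof (proj1 (proj2 S1)). pose proof (proj1 (proj2 S2)).
  destruct (sign_switch_points D 0 L c1 d1 S1 eps He) as [x1 [y1 [X1 [X1' [Y1 [Y1' P1]]]]]].
  destruct (sign_switch_points D 0 L c2 d2 S2 eps He) as [x2 [y2 [X2 [X2' [Y2 [Y2' P2]]]]]].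
  unfold eps in *. assert (D y1 <> 0) by (intro E; rewrite E in P1; lra).
  destruct (Rlt_le_dec (D y1 * D x2) 0) as [Q1|Q1].
  - exists (four_points x1 y1 x2 x2). apply alternating_three; auto; lra.
  - pose proof (sign_chain _ _ _ Q1 P2 ltac:(auto)) as R1.
    exists (four_points x1 y1 y2 y2). apply alternating_three; auto; lra.
Qed.

Lemma alternating_of_chi_ge3 D L : chi_ge D 0 L 3 -> exists pt, alternating D L 3 pt.
Proof.
  intros [l [Hnd [Hlen HF]]].
  destruct l as [|[c1 d1] [|[c2 d2] [|[c3 d3] [|]]]]; simpl in Hlen; try lia.
  inversion HF as [|? ? S1 HF1]; inversion HF1 as [|? ? S2 HF2]; inversion HF2 as [|? ? S3 _].
  simpl in S1, S2, S3.
  apply NoDup_cons_iff in Hnd as [N1 Hnd]. apply NoDup_cons_iff in Hnd as [N2 _].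
  assert (D12 : (c1, d1) <> (c2, d2)) by (intro E; apply N1; rewrite E; left; auto).
  assert (D13 : (c1, d1) <> (c3, d3)) by (intro E; apply N1; rewrite E; right; left; auto).
  assert (D23 : (c2, d2) <> (c3, d3)) by (intro E; apply N2; rewrite E; left; auto).
  pose proof (proj1 (proj2 S1)). pose proof (proj1 (proj2 S2)). pose proof (proj1 (proj2 S3)).
  destruct (sign_switches_ordered D 0 L _ _ _ _ S1 S2 D12);
  destruct (sign_switches_ordered D 0 L _ _ _ _ S1 S3 D13);
  destruct (sign_switches_ordered D 0 L _ _ _ _ S2 S3 D23); try lra;
  first [ apply (alternating_of_three_switches D L c1 d1 c2 d2 c3 d3); assumption
        | apply (alternating_of_three_switches D L c1 d1 c3 d3 c2 d2); assumption
        | apply (alternating_of_three_switches D L c2 d2 c1 d1 c3 d3); assumption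
        | apply (alternating_of_three_switches D L c2 d2 c3 d3 c1 d1); assumption
        | apply (alternating_of_three_switches D L c3 d3 c1 d1 c2 d2); assumption
        | apply (alternating_of_three_switches D L c3 d3 c2 d2 c1 d1); assumption ].
Qed.

Lemma alternating_of_chi_ge2 D L : chi_ge D 0 L 2 -> exists pt, alternating D L 2 pt.
Proof.
  intros [l [Hnd [Hlen HF]]].
  destruct l as [|[c1 d1] [|[c2 d2] [|]]]; simpl in Hlen; try lia.
  inversion HF as [|? ? S1 HF1]; inversion HF1 as [|? ? S2 _]. simpl in S1, S2.
  apply NoDup_cons_iff in Hnd as [N1 _].
  assert (D12 : (c1, d1) <> (c2, d2)) by (intro E; apply N1; rewrite E; left; auto).
  destruct (sign_switches_ordered D 0 L _ _ _ _ S1 S2 D12).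
  - apply (alternating_of_two_switches D L c1 d1 c2 d2); assumption.
  - apply (alternating_of_two_switches D L c2 d2 c1 d1); assumption.
Qed.

Lemma Rbar_lub_le_ub (E : Rbar -> Prop) (b : Rbar) :
  (forall x, E x -> Rbar_le x b) -> Rbar_le (Rbar_lub E) b.
Proof.
  intros H. unfold Rbar_lub. destruct (Rbar_ex_lub E) as [l [Hu Hl]]. simpl. apply Hl. exact H.
Qed.

Lemma Rbar_le_lub (E : Rbar -> Prop) (x : Rbar) : E x -> Rbar_le x (Rbar_lub E).
Proof.
  intros H. unfold Rbar_lub. destruct (Rbar_ex_lub E) as [l [Hu Hl]]. simpl. apply Hu. exact H.
Qed.

Lemma chi_le_of_not_chi_ge D c0 d0 k : ~ chi_ge D c0 d0 (S k) -> Rbar_le (chi D c0 d0) (INR k).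
Proof.
  intros Hn. apply Rbar_lub_le_ub. intros x [n [-> Hn']]. simpl. apply le_INR.
  destruct (Nat.le_gt_cases n k); auto. exfalso. apply Hn. eapply chi_ge_le; eauto.
Qed.

Lemma chi_ge_le_chi D c0 d0 k : chi_ge D c0 d0 k -> Rbar_le (INR k) (chi D c0 d0).
Proof. intros H. apply Rbar_le_lub. exists k; auto. Qed.

Lemma crossing_eq_2 F G : crossing F G = Finite 2 <->
  ((forall a b, 0 < a -> 0 < b -> ~ chi_ge (diff_ab F G a b) 0 (Rmin 1 (/ a)) 3) /\
   (exists a b, 0 < a /\ 0 < b /\ chi_ge (diff_ab F G a b) 0 (Rmin 1 (/ a)) 2)).
Proof.
  assert (Hchi : forall a b, 0 < a -> 0 < b ->
            Rbar_le (chi (diff_ab F G a b) 0 (Rmin 1 (/ a))) (crossing F G))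
    by (intros; apply Rbar_le_lub; exists a, b; auto).
  replace (Finite 2) with (Finite (INR 2)) by (simpl; f_equal; lra).
  split.
  - intros Hc. split.
    + intros a b Ha Hb H3. pose proof (chi_ge_le_chi _ _ _ _ H3) as H3'.
      specialize (Hchi a b Ha Hb). rewrite Hc in Hchi.
      destruct (chi (diff_ab F G a b) 0 (Rmin 1 (/ a))); simpl in *; try contradiction. lra.
    + apply NNPP. intro Hn.
      assert (H1 : Rbar_le (crossing F G) (INR 1)); [|rewrite Hc in H1; simpl in H1; lra].
      apply Rbar_lub_le_ub. intros x [a [b [Ha [Hb ->]]]].
      apply chi_le_of_not_chi_ge. intro H2. apply Hn. eauto.
  - intros [H3 [a [b [Ha [Hb H2]]]]]. apply Rbar_le_antisym.
    + apply Rbar_lub_le_ub. intros x [a' [b' [Ha' [Hb' ->]]]]. apply chi_le_of_not_chi_ge, H3; auto.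
    + eapply Rbar_le_trans; [apply chi_ge_le_chi, H2 | apply Hchi; auto].
Qed.

(** * The operator I *)

(* f extended by constants outside [0, 1], so that [tail_int f] is differentiable on R. *)
Definition ext01 (f : R -> R) : R -> R := fun x => f (clamp 0 1 x).
Definition tail_int (f : R -> R) (x : R) : R := RInt (ext01 f) x 1.
Definition Iext (f : R -> R) (x : R) : R := tail_int f x / int01 f.

Lemma ext01_continuous f : inD f -> forall x, continuous (ext01 f) x.
Proof.
  intros Hf x. apply continuity_pt_filterlim, continuity_clamp; [lra | apply (proj1 Hf)].
Qed.

Lemma ext01_eq f x : 0 <= x <= 1 -> ext01 f x = f x.
Proof. intros; unfold ext01; rewrite clamp_id; auto. Qed.

Lemma ex_RInt_ext01 f a b : inD f -> ex_RInt (ext01 f) a b.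
Proof.
  intros Hf. apply (@ex_RInt_continuous R_CompleteNormedModule).
  intros; apply ext01_continuous; auto.
Qed.

Lemma RInt_tail_int f x : 0 <= x <= 1 -> RInt f x 1 = tail_int f x.
Proof.
  intros Hx. apply RInt_ext. intros t Ht. rewrite ext01_eq; auto.
  unfold Rmin, Rmax in Ht; destruct Rle_dec; lra.
Qed.

Lemma int01_tail_int f : int01 f = tail_int f 0.
Proof. apply RInt_tail_int. lra. Qed.

Lemma tail_int_derive f x : inD f -> is_derive (tail_int f) x (- ext01 f x).
Proof.
  intros Hf. apply (is_derive_RInt' (ext01 f) (fun a => RInt (ext01 f) a 1) x 1).
  - apply filter_forall. intros a. apply (@RInt_correct R_CompleteNormedModule), ex_RInt_ext01, Hf.
  - apply ext01_continuous; auto.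
Qed.

Lemma tail_int_sub f x y : inD f -> tail_int f x - tail_int f y = RInt (ext01 f) x y.
Proof.
  intros Hf. unfold tail_int.
  rewrite <- (RInt_Chasles (ext01 f) x y 1 (ex_RInt_ext01 f x y Hf) (ex_RInt_ext01 f y 1 Hf)).
  unfold plus; simpl. lra.
Qed.

Lemma RInt_ext01_pos f x y : inD f -> 0 <= x -> x < y -> y <= 1 -> 0 < RInt (ext01 f) x y.
Proof.
  intros Hf Hx Hxy Hy. apply RInt_gt_0; auto.
  - intros t Ht. rewrite ext01_eq by lra. apply (proj2 (proj2 (proj2 (inD_props f Hf)))). lra.
  - intros; apply ext01_continuous; auto.
Qed.

Lemma RInt_ext01_nonneg f x y : inD f -> x <= y -> 0 <= RInt (ext01 f) x y.
Proof.
  intros Hf Hxy. apply RInt_ge_0; auto; [apply ex_RInt_ext01; auto|].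
  intros t Ht. apply (proj1 (proj2 (inD_props f Hf))), clamp_in. lra.
Qed.

Lemma int01_pos f : inD f -> 0 < int01 f.
Proof. intros Hf. rewrite int01_tail_int. apply RInt_ext01_pos; auto; lra. Qed.

Lemma int01_le f g : inD f -> inD g -> (forall x, 0 <= x <= 1 -> g x <= f x) ->
  forall x, 0 <= x <= 1 -> tail_int g x <= tail_int f x.
Proof.
  intros Hf Hg Hle x Hx.
  apply RInt_le; [lra | apply ex_RInt_ext01; auto | apply ex_RInt_ext01; auto |].
  intros t Ht. rewrite !ext01_eq by lra. apply Hle; lra.
Qed.

Lemma Iop_Iext f x : 0 <= x <= 1 -> Iop f x = Iext f x.
Proof. intros Hx. unfold Iop, Iext. rewrite RInt_tail_int; auto. Qed.

Lemma Iext_derive f x : inD f -> is_derive (Iext f) x (- ext01 f x / int01 f).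
Proof.
  intros Hf. unfold Iext.
  pose proof (is_derive_scal (tail_int f) x (/ int01 f) _ (tail_int_derive f x Hf)) as H.
  replace (- ext01 f x / int01 f) with (/ int01 f * - ext01 f x) by (unfold Rdiv; ring).
  eapply is_derive_ext; [|exact H]. intros t; simpl; unfold Rdiv; ring.
Qed.

Lemma Iext_continuity f x : inD f -> continuity_pt (Iext f) x.
Proof.
  intros Hf. apply continuity_pt_filterlim, (@ex_derive_continuous R_AbsRing R_NormedModule).
  eexists. apply Iext_derive; auto.
Qed.

Lemma Iop_inD f : inD f -> inD (Iop f).
Proof.
  intros Hf. pose proof (int01_pos f Hf) as HF. pose proof (int01_tail_int f) as H0.
  split; [|split; [|split; [|split]]].
  - apply (cont_on_ext (Iext f)); [intros; rewrite Iop_Iext; auto|].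
    apply continuity_cont_on. intros; apply Iext_continuity; auto.
  - intros x Hx. rewrite Iop_Iext by auto. unfold Iext.
    assert (0 <= tail_int f x) by (apply RInt_ext01_nonneg; auto; lra).
    assert (tail_int f x <= int01 f)
      by (pose proof (tail_int_sub f 0 x Hf);
          pose proof (RInt_ext01_nonneg f 0 x Hf ltac:(lra)); lra).
    split; [apply Rdiv_le_0_compat; lra|].
    apply Rmult_le_reg_r with (r := int01 f); auto. unfold Rdiv.
    rewrite Rmult_assoc, Rinv_l by lra. lra.
  - intros x y Hx Hxy Hy. rewrite !Iop_Iext by lra. unfold Iext.
    pose proof (tail_int_sub f x y Hf). pose proof (RInt_ext01_pos f x y Hf Hx Hxy Hy).
    apply Rmult_lt_compat_r; [apply Rinv_0_lt_compat; auto | lra].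
  - rewrite Iop_Iext by lra. unfold Iext. rewrite <- H0. field. lra.
  - rewrite Iop_Iext by lra. unfold Iext, tail_int. rewrite RInt_point. unfold zero; simpl.
    field. lra.
Qed.

Lemma diff_ab_Iop_Iext f g a b x : 0 < a -> 0 < x < Rmin 1 (/ a) ->
  diff_ab (Iop f) (Iop g) a b x = diff_ab (Iext f) (Iext g) a b x.
Proof.
  intros Ha Hx. destruct (window_scaled a x Ha ltac:(lra)) as [H1 H2].
  unfold diff_ab. rewrite (Iop_Iext f), (Iop_Iext g) by lra. reflexivity.
Qed.

Lemma diff_ab_Iext_derive f g a b x : inD f -> inD g ->
  is_derive (diff_ab (Iext f) (Iext g) a b) x
    (a * (- ext01 f (a * x) / int01 f) - b * (- ext01 g x / int01 g)).
Proof.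
  intros Hf Hg.
  assert (H1 : is_derive (fun y => Iext f (a * y)) x (a * (- ext01 f (a * x) / int01 f))).
  { pose proof (is_derive_scal (fun t => t) x a 1 (is_derive_id x)) as Hl.
    pose proof (is_derive_comp (Iext f) (fun y => a * y) x _ _ (Iext_derive f (a * x) Hf) Hl) as H.
    unfold scal, mult in H; simpl in H. unfold mult in H; simpl in H. rewrite Rmult_1_r in H.
    exact H. }
  pose proof (is_derive_minus _ _ x _ _ H1 (is_derive_scal _ x b _ (Iext_derive g x Hg))) as H.
  unfold minus, plus, opp in H; simpl in H.
  eapply is_derive_ext; [|exact H]. intros t; unfold diff_ab; simpl. ring.
Qed.

Lemma diff_ab_Iext_continuity f g a b x : inD f -> inD g ->
  continuity_pt (diff_ab (Iext f) (Iext g) a b) x.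
Proof.
  intros Hf Hg. apply continuity_pt_filterlim, (@ex_derive_continuous R_AbsRing R_NormedModule).
  eexists. apply diff_ab_Iext_derive; auto.
Qed.

Lemma diff_ab_Iext_derivative_eq f g a b x : inD f -> inD g -> 0 < a ->
  0 <= a * x <= 1 -> 0 <= x <= 1 ->
  a * (- ext01 f (a * x) / int01 f) - b * (- ext01 g x / int01 g) =
  - (a / int01 f) * diff_ab f g a (b * int01 f / (a * int01 g)) x.
Proof.
  intros Hf Hg Ha H1 H2. pose proof (int01_pos f Hf). pose proof (int01_pos g Hg).
  rewrite !ext01_eq by auto. unfold diff_ab. field. lra.
Qed.

Lemma Iext_mvt f g a b s t : inD f -> inD g -> 0 < a -> s < t -> 0 <= s -> t <= Rmin 1 (/ a) ->
  exists c, s <= c <= t /\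
    diff_ab (Iext f) (Iext g) a b t - diff_ab (Iext f) (Iext g) a b s =
    - (a / int01 f) * diff_ab f g a (b * int01 f / (a * int01 g)) c * (t - s).
Proof.
  intros Hf Hg Ha Hst Hs Ht.
  destruct (MVT_gen (diff_ab (Iext f) (Iext g) a b) s t
              (fun x => a * (- ext01 f (a * x) / int01 f) - b * (- ext01 g x / int01 g)))
    as [c [Hc Hc']].
  { intros x Hx. apply diff_ab_Iext_derive; auto. }
  { intros x Hx. apply diff_ab_Iext_continuity; auto. }
  rewrite Rmin_left, Rmax_right in Hc by lra.
  destruct (window_scaled a c Ha ltac:(lra)) as [Hac Hc1].
  rewrite diff_ab_Iext_derivative_eq in Hc' by (auto; lra).
  exists c. split; auto.
Qed.

(** * I preserves domination *)

Lemma Iext_mvt_sign f g a b s t : inD f -> inD g -> 0 < a -> s < t -> 0 <= s -> t <= Rmin 1 (/ a) ->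
  diff_ab (Iext f) (Iext g) a b s * diff_ab (Iext f) (Iext g) a b t < 0 ->
  exists xi, s <= xi <= t /\
    0 < diff_ab f g a (b * int01 f / (a * int01 g)) xi * diff_ab (Iext f) (Iext g) a b s.
Proof.
  intros Hf Hg Ha Hst Hs Ht Hsg. pose proof (int01_pos f Hf).
  destruct (Iext_mvt f g a b s t Hf Hg Ha Hst Hs Ht) as [c [Hc Hc']].
  exists c. split; auto.
  set (Ds := diff_ab (Iext f) (Iext g) a b s) in *.
  set (Dt := diff_ab (Iext f) (Iext g) a b t) in *.
  set (dd := diff_ab f g a (b * int01 f / (a * int01 g)) c) in *.
  assert (Hk : 0 < a / int01 f * (t - s))
    by (apply Rmult_lt_0_compat; [apply Rdiv_lt_0_compat |]; lra).
  assert (E : (Dt - Ds) * Ds = - (dd * Ds) * (a / int01 f * (t - s))) by (rewrite Hc'; ring).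
  assert ((Dt - Ds) * Ds < 0) by nra.
  nra.
Qed.

Lemma Iext_end_sign f g a b : inD f -> inD g -> 0 < a -> 0 < b -> a <> 1 ->
  0 < diff_ab (Iext f) (Iext g) a b (Rmin 1 (/ a)) *
      diff_ab f g a (b * int01 f / (a * int01 g)) (Rmin 1 (/ a)).
Proof.
  intros Hf Hg Ha Hb Ha1. pose proof (int01_pos f Hf). pose proof (int01_pos g Hg).
  assert (Hb' : 0 < b * int01 f / (a * int01 g)) by (apply Rdiv_lt_0_compat; nra).
  destruct (inD_props f Hf) as [_ [_ [_ Fp]]]. destruct (inD_props g Hg) as [_ [_ [_ Gp]]].
  pose proof (Iop_inD f Hf) as HIf. pose proof (Iop_inD g Hg) as HIg.
  destruct (inD_props _ HIf) as [_ [_ [_ IFp]]]. destruct (inD_props _ HIg) as [_ [_ [_ IGp]]].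
  unfold diff_ab. destruct (Rlt_le_dec 1 a) as [Hgt|Hle].
  - assert (/ a < 1) by (rewrite <- Rinv_1; apply Rinv_lt_contravar; lra).
    assert (0 < / a) by (apply Rinv_0_lt_compat; lra).
    rewrite Rmin_right, Rinv_r by lra. rewrite <- !Iop_Iext by lra.
    rewrite (inD_1 _ HIf), (inD_1 f Hf).
    specialize (IGp (/ a) ltac:(lra)). specialize (Gp (/ a) ltac:(lra)).
    assert (0 < b * Iop g (/ a)) by (apply Rmult_lt_0_compat; lra).
    assert (0 < b * int01 f / (a * int01 g) * g (/ a)) by (apply Rmult_lt_0_compat; lra).
    nra.
  - assert (a < 1) by lra. assert (1 < / a) by (rewrite <- Rinv_1; apply Rinv_lt_contravar; lra).
    rewrite Rmin_left, Rmult_1_r by lra. rewrite <- !Iop_Iext by lra.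
    rewrite (inD_1 _ HIg), (inD_1 g Hg).
    specialize (IFp a ltac:(lra)). specialize (Fp a ltac:(lra)).
    rewrite !Rmult_0_r, !Rminus_0_r. apply Rmult_lt_0_compat; lra.
Qed.

Lemma Iext_last_point f g a b t3 : inD f -> inD g -> 0 < a -> 0 < b -> a <> 1 ->
  0 <= t3 < Rmin 1 (/ a) -> diff_ab (Iext f) (Iext g) a b t3 <> 0 ->
  exists x3, t3 <= x3 <= Rmin 1 (/ a) /\
    0 < diff_ab f g a (b * int01 f / (a * int01 g)) x3 * diff_ab (Iext f) (Iext g) a b t3.
Proof.
  intros Hf Hg Ha Hb Ha1 Ht3 Hnz.
  set (L := Rmin 1 (/ a)) in *. set (D := diff_ab (Iext f) (Iext g) a b) in *.
  set (dl := diff_ab f g a (b * int01 f / (a * int01 g))).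
  pose proof (Iext_end_sign f g a b Hf Hg Ha Hb Ha1) as Hend. fold L D dl in Hend.
  destruct (Rlt_le_dec (D t3 * D L) 0) as [Hn|Hn].
  - destruct (Iext_mvt_sign f g a b t3 L Hf Hg Ha ltac:(lra) ltac:(lra) ltac:(fold L; lra) Hn)
      as [x3 [Hx3 P3]].
    exists x3. split; auto.
  - exists L. split; [lra|].
    assert (D L <> 0) by (intro E; rewrite E in Hend; lra).
    destruct (Rle_lt_or_eq _ _ Hn) as [|E]; [nra|].
    symmetry in E. apply Rmult_integral in E. tauto.
Qed.

Lemma alternating_of_Iext_alternating f g a b t : inD f -> inD g -> 0 < a -> 0 < b -> a <> 1 ->
  alternating (diff_ab (Iext f) (Iext g) a b) (Rmin 1 (/ a)) 3 t ->
  exists pt, alternating (diff_ab f g a (b * int01 f / (a * int01 g))) (Rmin 1 (/ a)) 3 pt.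
Proof.
  intros Hf Hg Ha Hb Ha1 HA.
  pose proof (alternating_nonzero _ _ 3 t ltac:(lia) HA) as Hnz.
  destruct HA as [H0 [Hk [Hinc Halt]]].
  destruct (window_bounds a Ha) as [HL0 _].
  set (L := Rmin 1 (/ a)) in *. set (D := diff_ab (Iext f) (Iext g) a b) in *.
  set (dl := diff_ab f g a (b * int01 f / (a * int01 g))).
  pose proof (Hinc O ltac:(lia)). pose proof (Hinc 1%nat ltac:(lia)).
  pose proof (Hinc 2%nat ltac:(lia)). pose proof (Halt O ltac:(lia)).
  pose proof (Halt 1%nat ltac:(lia)). pose proof (Halt 2%nat ltac:(lia)).
  destruct (Iext_mvt_sign f g a b (t O) (t 1%nat) Hf Hg Ha ltac:(lra) ltac:(lra) ltac:(fold L; lra)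
              ltac:(auto)) as [x0 [Hx0 P0]].
  destruct (Iext_mvt_sign f g a b (t 1%nat) (t 2%nat) Hf Hg Ha ltac:(lra) ltac:(lra)
              ltac:(fold L; lra) ltac:(auto)) as [x1 [Hx1 P1]].
  destruct (Iext_mvt_sign f g a b (t 2%nat) (t 3%nat) Hf Hg Ha ltac:(lra) ltac:(lra)
              ltac:(fold L; lra) ltac:(auto)) as [x2 [Hx2 P2]].
  destruct (Iext_last_point f g a b (t 3%nat) Hf Hg Ha Hb Ha1 ltac:(fold L; lra)
              (Hnz 3%nat ltac:(lia))) as [x3 [Hx3 P3]].
  fold L D dl in P0, P1, P2, P3, Hx3.
  assert (S01 : dl x0 * dl x1 < 0) by nra. assert (S12 : dl x1 * dl x2 < 0) by nra.
  assert (S23 : dl x2 * dl x3 < 0) by nra.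
  assert (x0 < x1) by (destruct (Req_dec x0 x1) as [E|]; [rewrite E in S01; nra | lra]).
  assert (x1 < x2) by (destruct (Req_dec x1 x2) as [E|]; [rewrite E in S12; nra | lra]).
  assert (x2 < x3) by (destruct (Req_dec x2 x3) as [E|]; [rewrite E in S23; nra | lra]).
  assert (Hx4 : exists x4, x2 < x4 < L /\ dl x2 * dl x4 < 0).
  { destruct (Rle_lt_or_eq x3 L ltac:(lra)) as [Hlt | ->]; [exists x3; auto|].
    assert (HdL : dl L <> 0) by (intro E; rewrite E in S23; lra).
    destruct (sign_near_right_end dl 0 L x2 (cont_on_diff_ab f g a _ Hf Hg Ha) HL0 ltac:(lra) HdL)
      as [y [Hy [_ Py]]].
    exists y. split; [lra | nra]. }
  destruct Hx4 as [x4 [Hx4 P4]].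
  exists (four_points x0 x1 x2 x4). apply alternating_four; auto; lra.
Qed.

Lemma diff_ab_sign_stable_in_a phi psi b k pt : cont_on phi 0 1 ->
  (forall i, (i <= k)%nat -> 0 <= pt i <= 1) ->
  (forall i, (i <= k)%nat -> diff_ab phi psi 1 b (pt i) <> 0) ->
  exists eta, 0 < eta /\ forall a', Rabs (a' - 1) < eta ->
    (forall i, (i <= k)%nat -> a' * pt i <= 1) ->
    forall i, (i <= k)%nat -> 0 < diff_ab phi psi a' b (pt i) * diff_ab phi psi 1 b (pt i).
Proof.
  intros Hc Hin Hnz.
  destruct (points_min_pos (fun i => Rabs (diff_ab phi psi 1 b (pt i))) k) as [rho [Hrho Hrho']].
  { intros i Hi. apply Rabs_pos_lt, Hnz, Hi. }
  destruct (cont_on_uniform_at_points phi 0 1 pt k (rho / 2) Hc ltac:(lra) Hin) as [eta [He H]].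
  exists (Rmin eta (1 / 2)). split; [apply Rmin_pos; lra|].
  intros a' Ha' Hak i Hi. pose proof (Rmin_l eta (1 / 2)). pose proof (Rmin_r eta (1 / 2)).
  assert (0 < a') by (apply Rabs_def2 in Ha'; lra).
  specialize (Hin i Hi). specialize (Hrho' i Hi). specialize (Hak i Hi). cbv beta in Hrho'.
  assert (Hd : Rabs (a' * pt i - pt i) < eta).
  { replace (a' * pt i - pt i) with ((a' - 1) * pt i) by ring.
    rewrite Rabs_mult, (Rabs_right (pt i)) by lra.
    assert (Rabs (a' - 1) * pt i <= Rabs (a' - 1) * 1)
      by (apply Rmult_le_compat_l; [apply Rabs_pos | lra]). lra. }
  specialize (H i Hi (a' * pt i) ltac:(split; nra) Hd).
  replace (diff_ab phi psi a' b (pt i))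
    with (diff_ab phi psi 1 b (pt i) - (phi (pt i) - phi (a' * pt i)))
    by (unfold diff_ab; rewrite Rmult_1_l; ring).
  apply small_perturbation_keeps_sign; [|apply Hnz, Hi].
  rewrite Rabs_minus_sym. lra.
Qed.

Lemma Iop_no_three_switches f g : inD f -> inD g ->
  (forall a b, 0 < a -> 0 < b -> ~ chi_ge (diff_ab f g a b) 0 (Rmin 1 (/ a)) 3) ->
  forall a b, 0 < a -> 0 < b -> ~ chi_ge (diff_ab (Iop f) (Iop g) a b) 0 (Rmin 1 (/ a)) 3.
Proof.
  intros Hf Hg Hno.
  assert (Hne1 : forall a b pt, 0 < a -> 0 < b -> a <> 1 ->
            ~ alternating (diff_ab (Iext f) (Iext g) a b) (Rmin 1 (/ a)) 3 pt).
  { intros a b pt Ha Hb Ha1 HA.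
    destruct (alternating_of_Iext_alternating f g a b pt Hf Hg Ha Hb Ha1 HA) as [pt' HA'].
    pose proof (int01_pos f Hf). pose proof (int01_pos g Hg).
    destruct (chi_ge_of_alternating_diff_ab f g a (b * int01 f / (a * int01 g)) 3 pt' Hf Hg Ha
                ltac:(apply Rdiv_lt_0_compat; nra) HA') as [c [Hc Hcc]].
    exact (Hno a c Ha Hc Hcc). }
  intros a b Ha Hb Hc.
  destruct (alternating_of_chi_ge3 _ _ Hc) as [pt HA].
  apply (alternating_ext _ (diff_ab (Iext f) (Iext g) a b)) in HA;
    [|intros; apply diff_ab_Iop_Iext; auto].
  (* For a = 1 the window end 1 is a common zero, so first move a slightly above 1. *)
  destruct (Req_dec a 1) as [->|Ha1]; [|exact (Hne1 a b pt Ha Hb Ha1 HA)].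
  rewrite Rinv_1, Rmin_left in HA by lra.
  pose proof (alternating_in _ _ _ _ HA) as Hin.
  destruct (diff_ab_sign_stable_in_a (Iext f) (Iext g) b 3 pt
              (continuity_cont_on _ 0 1 (fun x => Iext_continuity f x Hf))
              ltac:(intros i Hi; specialize (Hin i Hi); lra)
              (alternating_nonzero _ 1 3 pt ltac:(lia) HA)) as [eta [He Hp]].
  pose proof (Hin 3%nat (le_n _)).
  pose proof (Rmin_l (eta / 2) ((1 - pt 3%nat) / 2)).
  pose proof (Rmin_r (eta / 2) ((1 - pt 3%nat) / 2)).
  set (th := Rmin (eta / 2) ((1 - pt 3%nat) / 2)) in *.
  assert (Hth : 0 < th) by (apply Rmin_pos; lra).
  assert (Hinv : / (1 + th) < 1) by (rewrite <- Rinv_1; apply Rinv_lt_contravar; lra).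
  assert (Hpt : forall i, (i <= 3)%nat -> (1 + th) * pt i <= 1).
  { intros i Hi. specialize (Hin i Hi).
    pose proof (chain_le pt 3 (proj1 (proj2 (proj2 HA))) i 3 ltac:(lia)). nra. }
  apply (Hne1 (1 + th) b pt ltac:(lra) Hb ltac:(lra)).
  apply (alternating_of_same_signs _ _ 1 _ 3 pt HA).
  - rewrite Rmin_right by lra. apply Rmult_lt_reg_l with (r := 1 + th); [lra|].
    rewrite Rinv_r by lra. nra.
  - apply Hp; [rewrite Rabs_right; lra | exact Hpt].
Qed.

Lemma strict_gap_dilated F G x0 : inD F -> inD G -> 0 < x0 < 1 -> G x0 < F x0 ->
  exists a b, 1 < a /\ 1 < b /\ a * x0 < 1 /\ 0 < F (a * x0) - b * G x0.
Proof.
  intros HF HG Hx0 Hlt.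
  destruct (inD_props F HF) as [Fc _]. destruct (inD_props G HG) as [_ [_ [_ Gp]]].
  assert (HG0 : 0 < G x0) by (apply Gp; lra).
  set (b := (1 + F x0 / G x0) / 2).
  assert (Hr : 1 < F x0 / G x0)
    by (apply Rmult_lt_reg_r with (r := G x0); auto; unfold Rdiv; rewrite Rmult_assoc, Rinv_l; lra).
  assert (Hbx : 0 < F x0 - b * G x0).
  { assert (Hlt' : b * G x0 < F x0 / G x0 * G x0) by (apply Rmult_lt_compat_r; unfold b; lra).
    unfold Rdiv in Hlt'. rewrite Rmult_assoc, Rinv_l in Hlt'; lra. }
  destruct (Fc x0 ltac:(lra) (F x0 - b * G x0) Hbx) as [d [Hd Hd']].
  pose proof (Rmin_l (d / 2) ((1 - x0) / 2)). pose proof (Rmin_r (d / 2) ((1 - x0) / 2)).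
  set (th := Rmin (d / 2) ((1 - x0) / 2)) in *.
  assert (Hth : 0 < th) by (apply Rmin_pos; lra).
  exists (1 + th), b. split; [lra | split; [unfold b; lra | split; [nra |]]].
  specialize (Hd' ((1 + th) * x0) ltac:(split; nra) ltac:(rewrite Rabs_right; nra)).
  apply Rabs_def2 in Hd'. lra.
Qed.

Lemma chi_ge2_of_strict F G x0 : inD F -> inD G -> 0 < x0 < 1 -> G x0 < F x0 ->
  exists a b, 0 < a /\ 0 < b /\ chi_ge (diff_ab F G a b) 0 (Rmin 1 (/ a)) 2.
Proof.
  intros HF HG Hx0 Hlt.
  destruct (strict_gap_dilated F G x0 HF HG Hx0 Hlt) as [a [b [Ha [Hb [Hax HFa]]]]].
  destruct (inD_props G HG) as [_ [_ [_ Gp]]].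
  assert (Hia : 0 < / a < 1)
    by (split; [apply Rinv_0_lt_compat | rewrite <- Rinv_1; apply Rinv_lt_contravar]; lra).
  assert (HL : Rmin 1 (/ a) = / a) by (apply Rmin_right; lra).
  assert (Hx0L : x0 < / a)
    by (apply Rmult_lt_reg_l with (r := a); [lra | rewrite Rinv_r; lra]).
  set (D := diff_ab F G a b).
  assert (HcD : cont_on D 0 (/ a)) by (rewrite <- HL; apply cont_on_diff_ab; auto; lra).
  assert (HD0 : D 0 < 0) by (unfold D; rewrite diff_ab_at_0 by auto; lra).
  assert (HDL : D (/ a) < 0)
    by (unfold D; rewrite diff_ab_at_inv by (auto; lra); specialize (Gp (/ a) ltac:(lra)); nra).
  destruct (sign_near_left_end D 0 (/ a) x0 HcD ltac:(lra) ltac:(lra) ltac:(lra))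
    as [y0 [Hy0 [_ P0]]].
  destruct (sign_near_right_end D 0 (/ a) x0 HcD ltac:(lra) ltac:(lra) ltac:(lra))
    as [y1 [Hy1 [_ P1]]].
  destruct (chi_ge_of_alternating_diff_ab F G a b 2 (four_points y0 x0 y1 y1) HF HG
              ltac:(lra) ltac:(lra)) as [c [Hc Hcc]].
  { assert (0 < D x0) by (unfold D, diff_ab; lra).
    assert (D y0 < 0) by nra. assert (D y1 < 0) by nra.
    rewrite HL. apply alternating_three; fold D; simpl; nra. }
  exists a, c. split; [lra | auto].
Qed.

Lemma Iext_endpoints f : inD f -> Iext f 0 = 1 /\ Iext f 1 = 0.
Proof.
  intros Hf. destruct (Iop_inD f Hf) as [_ [_ [_ [E0 E1]]]].
  rewrite !Iop_Iext in E0, E1 by lra. auto.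
Qed.

(* Iext f - Iext g vanishes at 0 and 1 and is negative at x; as its derivative is
   -(f - beta g) / int01 f, the mean value theorem gives the sign pattern -, +, - of f - beta g. *)
Lemma sign_pattern_of_Iext_gt f g x : inD f -> inD g -> 0 <= x <= 1 -> int01 g < int01 f ->
  Iext f x < Iext g x -> exists c0 c1 c2, 0 < c0 < c1 /\ c1 < c2 < 1 /\
    diff_ab f g 1 (int01 f / int01 g) c0 < 0 /\ 0 < diff_ab f g 1 (int01 f / int01 g) c1 /\
    diff_ab f g 1 (int01 f / int01 g) c2 < 0.
Proof.
  intros Hf Hg Hx Hint Hlt. pose proof (int01_pos f Hf). pose proof (int01_pos g Hg).
  set (beta := int01 f / int01 g).
  assert (Hbeta : 1 < beta) by (apply Rmult_lt_reg_r with (r := int01 g); auto;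
                                unfold beta, Rdiv; rewrite Rmult_assoc, Rinv_l; lra).
  assert (Eb : 1 * int01 f / (1 * int01 g) = beta) by (unfold beta; field; lra).
  set (delta := diff_ab f g 1 beta).
  assert (HPsi : forall y, diff_ab (Iext f) (Iext g) 1 1 y = Iext f y - Iext g y)
    by (intros; unfold diff_ab; rewrite !Rmult_1_l; reflexivity).
  destruct (Iext_endpoints f Hf) as [F0 F1]. destruct (Iext_endpoints g Hg) as [G0 G1].
  assert (Hx01 : 0 < x < 1).
  { split; [destruct (Req_dec x 0) as [->|] | destruct (Req_dec x 1) as [->|]]; lra. }
  assert (HL : Rmin 1 (/ 1) = 1) by (rewrite Rinv_1; apply Rmin_left; lra).
  destruct (Iext_mvt f g 1 1 0 x Hf Hg ltac:(lra) ltac:(lra) ltac:(lra) ltac:(rewrite HL; lra))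
    as [c1 [Hc1 Hc1']].
  destruct (Iext_mvt f g 1 1 x 1 Hf Hg ltac:(lra) ltac:(lra) ltac:(lra) ltac:(rewrite HL; lra))
    as [c2 [Hc2 Hc2']].
  rewrite !HPsi, F0, G0, F1, G1, Eb in *. fold delta in Hc1', Hc2'.
  assert (0 < 1 / int01 f * x) by (apply Rmult_lt_0_compat; [apply Rdiv_lt_0_compat |]; lra).
  assert (0 < 1 / int01 f * (1 - x)) by (apply Rmult_lt_0_compat; [apply Rdiv_lt_0_compat |]; lra).
  assert (D1 : 0 < delta c1) by nra.
  assert (D2 : delta c2 < 0) by nra.
  assert (Hd0 : delta 0 < 0) by (unfold delta; rewrite diff_ab_at_0 by auto; lra).
  assert (Hd1 : delta 1 = 0) by (unfold delta; rewrite diff_ab_at_1 by auto; apply inD_1, Hf).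
  assert (Hc1pos : 0 < c1) by (destruct (Req_dec c1 0) as [E|]; [rewrite E in D1; lra | lra]).
  assert (Hc2lt : c2 < 1) by (destruct (Req_dec c2 1) as [E|]; [rewrite E in D2; lra | lra]).
  assert (Hc12 : c1 < c2) by (destruct (Req_dec c1 c2) as [E|]; [rewrite E in D1; lra | lra]).
  destruct (sign_near_left_end delta 0 1 c1 (cont_on_diff_ab_1 f g _ Hf Hg) ltac:(lra) Hc1pos
              ltac:(lra)) as [c0 [Hc0 [_ P0]]].
  exists c0, c1, c2. repeat split; try lra. nra.
Qed.

Lemma Iop_le_of_no_three_switches f g : inD f -> inD g -> (forall x, 0 <= x <= 1 -> g x <= f x) ->
  (forall a b, 0 < a -> 0 < b -> ~ chi_ge (diff_ab f g a b) 0 (Rmin 1 (/ a)) 3) ->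
  forall x, 0 <= x <= 1 -> Iop g x <= Iop f x.
Proof.
  intros Hf Hg Hle H3 x Hx. rewrite !Iop_Iext by auto. apply Rnot_lt_le. intro Hlt.
  pose proof (int01_pos f Hf). pose proof (int01_pos g Hg).
  pose proof (int01_le f g Hf Hg Hle x Hx) as Htail.
  assert (HFG : int01 g <= int01 f) by (rewrite !int01_tail_int; apply int01_le; auto; lra).
  destruct (Rle_lt_or_eq _ _ HFG) as [Hint | Hint].
  2: { unfold Iext in Hlt. rewrite Hint in Hlt. apply Rmult_lt_reg_r in Hlt; [lra|].
       apply Rinv_0_lt_compat; auto. }
  (* Shrinking a below 1 keeps this pattern and makes the window end 1 positive. *)
  destruct (sign_pattern_of_Iext_gt f g x Hf Hg Hx Hint Hlt)
    as [c0 [c1 [c2 [Hc01 [Hc12 [D0 [D1 D2]]]]]]].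
  set (beta := int01 f / int01 g) in *.
  assert (Hbeta : 0 < beta) by (apply Rdiv_lt_0_compat; lra).
  destruct (inD_props f Hf) as [Fc [_ [_ Fp]]].
  destruct (diff_ab_sign_stable_in_a f g beta 2 (four_points c0 c1 c2 c2) Fc) as [eta [He Hp]].
  { intros i Hi. destruct i as [|[|[|i]]]; simpl; lra. }
  { intros i Hi. destruct i as [|[|[|i]]]; simpl; lra. }
  pose proof (Rmin_l (eta / 2) (1 / 2)). pose proof (Rmin_r (eta / 2) (1 / 2)).
  pose proof (Rmin_pos (eta / 2) (1 / 2) ltac:(lra) ltac:(lra)).
  set (a' := 1 - Rmin (eta / 2) (1 / 2)) in *.
  assert (Ha' : 0 < a' < 1) by (unfold a'; lra).
  specialize (Hp a' ltac:(unfold a'; rewrite Rabs_left; lra)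
                ltac:(intros i Hi; destruct i as [|[|[|i]]]; simpl; nra)).
  pose proof (Hp O ltac:(lia)) as Q0. pose proof (Hp 1%nat ltac:(lia)) as Q1.
  pose proof (Hp 2%nat ltac:(lia)) as Q2. simpl in Q0, Q1, Q2.
  set (D := diff_ab f g a' beta) in *.
  assert (HL : Rmin 1 (/ a') = 1)
    by (apply Rmin_left; rewrite <- Rinv_1; left; apply Rinv_lt_contravar; lra).
  assert (HcD : cont_on D 0 1) by (rewrite <- HL; apply cont_on_diff_ab; auto; lra).
  assert (HD1 : 0 < D 1) by (unfold D; rewrite diff_ab_at_1 by auto; apply Fp; lra).
  destruct (sign_near_right_end D 0 1 c2 HcD ltac:(lra) ltac:(lra) ltac:(lra)) as [y [Hy [_ Py]]].
  destruct (chi_ge_of_alternating_diff_ab f g a' beta 3 (four_points c0 c1 c2 y) Hf Hg ltac:(lra)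
              Hbeta) as [c [Hc Hcc]].
  { assert (D c0 < 0) by nra. assert (0 < D c1) by nra. assert (D c2 < 0) by nra.
    assert (0 < D y) by nra.
    rewrite HL. apply alternating_four; fold D; try lra; nra. }
  apply (H3 a' c); auto; lra.
Qed.

Lemma Iop_lt_somewhere f g : inD f -> inD g -> (forall x, 0 <= x <= 1 -> Iop g x <= Iop f x) ->
  (exists x1, 0 < x1 < 1 /\ g x1 < f x1) -> exists x0, 0 < x0 < 1 /\ Iop g x0 < Iop f x0.
Proof.
  intros Hf Hg Hle [x1 [Hx1 Hlt]]. apply NNPP; intro Hn.
  assert (Heq : forall x, 0 < x < 1 -> Iext f x = Iext g x).
  { intros x Hx. rewrite <- !Iop_Iext by lra. destruct (Rle_lt_or_eq _ _ (Hle x ltac:(lra))); auto.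
    exfalso; apply Hn; eauto. }
  pose proof (int01_pos f Hf). pose proof (int01_pos g Hg).
  set (beta := 1 * int01 f / (1 * int01 g)). set (delta := diff_ab f g 1 beta).
  assert (Hz : forall x, 0 < x < 1 -> delta x = 0).
  { intros x Hx. pose proof (diff_ab_Iext_derive f g 1 1 x Hf Hg) as Hd.
    assert (Hd0 : is_derive (diff_ab (Iext f) (Iext g) 1 1) x 0).
    { apply (is_derive_ext_loc (fun _ => 0)); [|apply (@is_derive_const R_AbsRing R_NormedModule)].
      apply (locally_interval _ x (Finite 0) (Finite 1)); simpl; try lra.
      intros y Hy0 Hy1. unfold diff_ab. rewrite Rmult_1_l, Heq by lra. ring. }
    apply is_derive_unique in Hd. apply is_derive_unique in Hd0. rewrite Hd0 in Hd.
    rewrite diff_ab_Iext_derivative_eq in Hd by (auto; lra).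
    fold beta delta in Hd. assert (0 < 1 / int01 f) by (apply Rdiv_lt_0_compat; lra). nra. }
  assert (Hb1 : beta = 1).
  { apply NNPP; intro Hb.
    pose proof (cont_on_diff_ab_1 f g beta Hf Hg) as Hcd.
    assert (Hd0 : delta 0 <> 0) by (unfold delta; rewrite diff_ab_at_0 by auto; lra).
    destruct (sign_near_left_end delta 0 1 (1 / 2) Hcd ltac:(lra) ltac:(lra) Hd0) as [y [Hy [_ P]]].
    rewrite Hz in P by lra. lra. }
  specialize (Hz x1 Hx1). unfold delta, diff_ab in Hz. rewrite Hb1, Rmult_1_l in Hz. lra.
Qed.

Lemma alternating_extend D L pt : cont_on D 0 L -> 0 < L -> D 0 * D L < 0 ->
  alternating D L 2 pt -> exists pt', alternating D L 3 pt'.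
Proof.
  intros Hc HL Hend [H0 [Hk [Hinc Halt]]].
  pose proof (Hinc O ltac:(lia)). pose proof (Hinc 1%nat ltac:(lia)).
  pose proof (Halt O ltac:(lia)) as A0. pose proof (Halt 1%nat ltac:(lia)) as A1.
  assert (N0 : D 0 <> 0) by (intro E; rewrite E in Hend; lra).
  assert (NL : D L <> 0) by (intro E; rewrite E in Hend; lra).
  destruct (Rlt_le_dec (D (pt O) * D 0) 0) as [Q|Q].
  - destruct (sign_near_left_end D 0 L (pt O) Hc HL H0 N0) as [y [Hy [HyL P]]].
    exists (four_points y (pt O) (pt 1%nat) (pt 2%nat)).
    apply alternating_four; auto; lra || nra.
  - assert (Q3 : D (pt 2%nat) * D L < 0).
    { assert (D (pt O) <> 0) by (intro E; rewrite E in A0; lra).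
      pose proof (sign_chain _ _ _ Q Hend ltac:(auto)). nra. }
    destruct (sign_near_right_end D 0 L (pt 2%nat) Hc HL Hk NL) as [y [Hy [Hy0 P]]].
    exists (four_points (pt O) (pt 1%nat) (pt 2%nat) y).
    apply alternating_four; auto; lra || nra.
Qed.

Lemma diff_ab_self_pos f a b x : inD f -> 0 < a < 1 -> b <= 1 -> 0 < x < 1 ->
  0 < diff_ab f f a b x.
Proof.
  intros Hf Ha Hb Hx. unfold diff_ab.
  pose proof (inD_lt f (a * x) x Hf ltac:(nra) ltac:(nra) ltac:(lra)).
  pose proof (proj1 (proj2 Hf) x ltac:(lra)). nra.
Qed.

Lemma diff_ab_self_neg f a b x : inD f -> 1 < a -> 1 <= b -> 0 < x < / a ->
  diff_ab f f a b x < 0.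
Proof.
  intros Hf Ha Hb Hx. unfold diff_ab.
  assert (a * x < 1) by (apply Rmult_lt_reg_l with (r := / a); [lra|];
                         rewrite <- Rmult_assoc, Rinv_l, Rmult_1_l, Rmult_1_r; lra).
  assert (/ a < 1) by (rewrite <- Rinv_1; apply Rinv_lt_contravar; lra).
  pose proof (inD_lt f x (a * x) Hf ltac:(lra) ltac:(nra) ltac:(lra)).
  pose proof (proj1 (proj2 Hf) x ltac:(lra)). nra.
Qed.

Lemma chi_ge3_of_self_chi_ge2 f a b : inD f -> 0 < a -> 0 < b ->
  chi_ge (diff_ab f f a b) 0 (Rmin 1 (/ a)) 2 ->
  exists c, 0 < c /\ chi_ge (diff_ab f f a c) 0 (Rmin 1 (/ a)) 3.
Proof.
  intros Hf Ha Hb H2.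
  destruct (alternating_of_chi_ge2 _ _ H2) as [pt HA].
  destruct (inD_props f Hf) as [_ [Fb [_ Fp]]].
  destruct (window_bounds a Ha) as [HL0 [HL1 HaL]].
  pose proof (alternating_in _ _ _ _ HA) as Hin.
  pose proof (Hin O ltac:(lia)). pose proof (Hin 1%nat ltac:(lia)).
  set (L := Rmin 1 (/ a)) in *. set (D := diff_ab f f a b).
  pose proof (proj2 (proj2 (proj2 HA)) O ltac:(lia)) as A0. fold D in A0.
  cut (D 0 * D L < 0).
  { intros Hend. destruct (alternating_extend D L pt (cont_on_diff_ab f f a b Hf Hf Ha) HL0 Hend HA)
      as [pt' HA']. exact (chi_ge_of_alternating_diff_ab f f a b 3 pt' Hf Hf Ha Hb HA'). }
  unfold D at 1. rewrite diff_ab_at_0 by auto.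
  destruct (Rtotal_order a 1) as [Hlt|[->|Hgt]].
  - assert (HLe : L = 1)
      by (unfold L; apply Rmin_left; rewrite <- Rinv_1; left; apply Rinv_lt_contravar; lra).
    unfold D. rewrite HLe, diff_ab_at_1 by auto.
    destruct (Rle_lt_dec b 1) as [Hb1|Hb1]; [exfalso | specialize (Fp a ltac:(lra)); nra].
    pose proof (diff_ab_self_pos f a b (pt O) Hf ltac:(lra) Hb1 ltac:(lra)).
    pose proof (diff_ab_self_pos f a b (pt 1%nat) Hf ltac:(lra) Hb1 ltac:(lra)).
    unfold D in A0. nra.
  - exfalso. unfold D, diff_ab in A0. rewrite !Rmult_1_l in A0.
    destruct (Fb (pt O) ltac:(lra)). destruct (Fb (pt 1%nat) ltac:(lra)).
    assert (0 <= ((1 - b) * (1 - b)) * (f (pt O) * f (pt 1%nat)))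
      by (apply Rmult_le_pos; [apply Rle_0_sqr | apply Rmult_le_pos; lra]).
    lra.
  - assert (HLe : L = / a)
      by (unfold L; apply Rmin_right; rewrite <- Rinv_1; left; apply Rinv_lt_contravar; lra).
    assert (Hia : 0 < / a < 1)
      by (split; [apply Rinv_0_lt_compat | rewrite <- Rinv_1; apply Rinv_lt_contravar]; lra).
    unfold D. rewrite HLe, diff_ab_at_inv by auto.
    destruct (Rle_lt_dec 1 b) as [Hb1|Hb1];
      [exfalso | specialize (Fp (/ a) ltac:(lra)); assert (0 < b * f (/ a)) by nra; nra].
    rewrite HLe in *.
    pose proof (diff_ab_self_neg f a b (pt O) Hf Hgt Hb1 ltac:(lra)).
    pose proof (diff_ab_self_neg f a b (pt 1%nat) Hf Hgt Hb1 ltac:(lra)).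
    unfold D in A0. nra.
Qed.

Lemma lt_somewhere_of_dominated f g : inD f -> inD g -> dominated g f ->
  exists x1, 0 < x1 < 1 /\ g x1 < f x1.
Proof.
  intros Hf Hg [Hcr Hle]. apply crossing_eq_2 in Hcr as [H3 [a [b [Ha [Hb H2]]]]].
  apply NNPP; intro Hn.
  assert (E : forall x, 0 <= x <= 1 -> g x = f x).
  { intros x Hx. destruct (Req_dec x 0) as [->|]; [rewrite !inD_0; auto|].
    destruct (Req_dec x 1) as [->|]; [rewrite !inD_1; auto|].
    destruct (Rle_lt_or_eq _ _ (Hle x Hx)); auto. exfalso; apply Hn; exists x; split; auto; lra. }
  assert (Ext : forall c x, 0 <= x <= Rmin 1 (/ a) -> diff_ab f g a c x = diff_ab f f a c x).
  { intros c x Hx. destruct (window_scaled a x Ha Hx). unfold diff_ab. rewrite E; lra. }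
  destruct (chi_ge3_of_self_chi_ge2 f a b Hf Ha Hb (chi_ge_ext _ _ _ _ _ (Ext b) H2))
    as [c [Hc Hcc]].
  apply (H3 a c Ha Hc). apply (chi_ge_ext (diff_ab f f a c)); auto.
  intros; symmetry; apply Ext; auto.
Qed.

Lemma dominated_Iop f g : inD f -> inD g -> dominated g f -> dominated (Iop g) (Iop f).
Proof.
  intros Hf Hg Hd. pose proof (lt_somewhere_of_dominated f g Hf Hg Hd) as Hx1.
  destruct Hd as [Hcr Hle]. apply crossing_eq_2 in Hcr as [H3 _].
  pose proof (Iop_le_of_no_three_switches f g Hf Hg Hle H3) as HIle.
  destruct (Iop_lt_somewhere f g Hf Hg HIle Hx1) as [x0 [Hx0 Hlt]].
  split; auto. apply crossing_eq_2. split.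
  - apply Iop_no_three_switches; auto.
  - apply (chi_ge2_of_strict (Iop f) (Iop g) x0); auto; apply Iop_inD; auto.
Qed.

(** * Inverse functions *)

Lemma finv_spec f y : inD f -> 0 <= y <= 1 -> 0 <= finv f y <= 1 /\ f (finv f y) = y.
Proof.
  intros Hf Hy. unfold finv. apply epsilon_spec. pose proof Hf as [Hc [_ [_ [H0 H1]]]].
  destruct (Req_dec y 1) as [->|]; [exists 0; split; [lra | auto]|].
  destruct (Req_dec y 0) as [->|]; [exists 1; split; [lra | auto]|].
  destruct (cont_on_root (fun x => f x - y * 1) 0 1 ltac:(lra)) as [x [Hx Hx']].
  - apply cont_on_minus_scal; auto. apply cont_on_const.
  - rewrite H0, H1. nra.
  - exists x. split; lra.
Qed.

Lemma finv_f f x : inD f -> 0 <= x <= 1 -> finv f (f x) = x.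
Proof.
  intros Hf Hx. pose proof (proj1 (proj2 Hf) x Hx).
  destruct (finv_spec f (f x) Hf H) as [H1 H2]. apply (inD_inj f); auto.
Qed.

Lemma finv_lt f y y' : inD f -> 0 <= y -> y < y' -> y' <= 1 -> finv f y' < finv f y.
Proof.
  intros Hf Hy Hyy Hy'. destruct (finv_spec f y Hf ltac:(lra)) as [A1 A2].
  destruct (finv_spec f y' Hf ltac:(lra)) as [B1 B2].
  apply (inD_lt_rev f); auto. lra.
Qed.

Lemma finv_cont f : inD f -> cont_on (finv f) 0 1.
Proof.
  intros Hf y Hy eps He. pose proof Hf as [_ [_ [Hs _]]].
  destruct (finv_spec f y Hf Hy) as [[Hx0 Hx1] Hfx]. set (x := finv f y) in *.
  assert (HL : exists dl, 0 < dl /\ forall y', 0 <= y' <= 1 -> y' < y + dl -> x - eps < finv f y').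
  { destruct (Rlt_le_dec (x - eps) 0).
    - exists 1. split; [lra|]. intros y' Hy' _. destruct (finv_spec f y' Hf Hy'). lra.
    - exists (f (x - eps / 2) - y). split.
      + rewrite <- Hfx. pose proof (Hs (x - eps / 2) x ltac:(lra) ltac:(lra) ltac:(lra)). lra.
      + intros y' Hy' Hlt. destruct (finv_spec f y' Hf Hy') as [C1 C2].
        pose proof (Hs (x - eps) (x - eps / 2) ltac:(lra) ltac:(lra) ltac:(lra)).
        apply (inD_lt_rev f); [exact Hf | lra | lra | rewrite C2; lra]. }
  assert (HR : exists dr, 0 < dr /\ forall y', 0 <= y' <= 1 -> y - dr < y' -> finv f y' < x + eps).
  { destruct (Rlt_le_dec 1 (x + eps)).
    - exists 1. split; [lra|]. intros y' Hy' _. destruct (finv_spec f y' Hf Hy'). lra.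
    - exists (y - f (x + eps / 2)). split.
      + rewrite <- Hfx. pose proof (Hs x (x + eps / 2) ltac:(lra) ltac:(lra) ltac:(lra)). lra.
      + intros y' Hy' Hlt. destruct (finv_spec f y' Hf Hy') as [C1 C2].
        pose proof (Hs (x + eps / 2) (x + eps) ltac:(lra) ltac:(lra) ltac:(lra)).
        apply (inD_lt_rev f); [exact Hf | lra | lra | rewrite C2; lra]. }
  destruct HL as [dl [Hdl HL]]. destruct HR as [dr [Hdr HR]].
  exists (Rmin dl dr). split; [apply Rmin_pos; auto|].
  intros y' Hy' Hd. pose proof (Rmin_l dl dr). pose proof (Rmin_r dl dr).
  apply Rabs_def2 in Hd. specialize (HL y' Hy' ltac:(lra)). specialize (HR y' Hy' ltac:(lra)).
  apply Rabs_def1; lra.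
Qed.

Lemma finv_inD f : inD f -> inD (finv f).
Proof.
  intros Hf. pose proof Hf as [_ [_ [_ [H0 H1]]]].
  split; [apply finv_cont, Hf|]. split; [intros y Hy; apply finv_spec; auto|].
  split; [intros; apply finv_lt; auto|].
  split; [rewrite <- H1 | rewrite <- H0]; apply finv_f; auto; lra.
Qed.

Lemma finv_le f g : inD f -> inD g -> (forall x, 0 <= x <= 1 -> g x <= f x) ->
  forall y, 0 <= y <= 1 -> finv g y <= finv f y.
Proof.
  intros Hf Hg Hle y Hy. destruct (finv_spec g y Hg Hy) as [A1 A2].
  destruct (finv_spec f y Hf Hy) as [B1 B2].
  apply (inD_le_rev f); auto. rewrite B2, <- A2 at 1. apply Hle; auto.
Qed.

Lemma finv_involutive f y : inD f -> 0 <= y <= 1 -> finv (finv f) y = f y.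
Proof.
  intros Hf Hy. rewrite <- (finv_f f y Hf Hy) at 1.
  apply finv_f; [apply finv_inD; auto | apply (proj1 (proj2 Hf)); auto].
Qed.

(* At y = g x the difference of inverses is f^*(b g x) - a x, and f is decreasing. *)
Lemma finv_diff_ab_sign f g a b x : inD f -> inD g -> 0 <= x <= 1 -> 0 <= a * x <= 1 ->
  0 <= b * g x <= 1 -> diff_ab f g a b x <> 0 ->
  0 < diff_ab (finv f) (finv g) b a (g x) * diff_ab f g a b x.
Proof.
  intros Hf Hg Hx Hax Hbg Hnz. unfold diff_ab in *. rewrite (finv_f g x Hg Hx).
  destruct (finv_spec f (b * g x) Hf Hbg) as [U1 U2]. set (u := finv f (b * g x)) in *.
  rewrite <- U2 in *. destruct (Rtotal_order (a * x) u) as [H|[H|H]].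
  - pose proof (inD_lt f (a * x) u Hf ltac:(lra) H ltac:(lra)). nra.
  - rewrite H in Hnz. lra.
  - pose proof (inD_lt f u (a * x) Hf ltac:(lra) H ltac:(lra)). nra.
Qed.

Lemma finv_diff_ab_zero f g a b x : inD f -> inD g -> 0 <= x <= 1 -> 0 <= a * x <= 1 ->
  diff_ab f g a b x = 0 -> diff_ab (finv f) (finv g) b a (g x) = 0.
Proof.
  intros Hf Hg Hx Hax H0. unfold diff_ab in *. rewrite (finv_f g x Hg Hx).
  replace (b * g x) with (f (a * x)) by lra. rewrite finv_f; auto. ring.
Qed.

Lemma sign_switch_sides D c0 d0 c d : cont_on D c0 d0 -> sign_switch D c0 d0 c d ->
  exists del, 0 < del /\ del <= c - c0 /\ del <= d0 - d /\
    forall t1 t2, 0 < t1 <= del -> 0 < t2 <= del -> D (c - t1) * D (d + t2) < 0.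
Proof.
  intros Hc [H1 [H2 [H3 [H4 [del [Hdel [Hdel2 HP]]]]]]].
  pose proof (Rmin_l (c - c0) (d0 - d)). pose proof (Rmin_r (c - c0) (d0 - d)).
  exists del. do 3 (split; [lra|]). intros t1 t2 Ht1 Ht2.
  assert (Hleft : 0 < D (c - t1) * D (c - t2)).
  { pose proof (Rmin_l t1 t2). pose proof (Rmin_r t1 t2).
    pose proof (Rmin_pos t1 t2 ltac:(lra) ltac:(lra)).
    apply (cont_on_same_sign D (c - del) (c - Rmin t1 t2));
      [eapply cont_on_subinterval; [exact Hc | lra | lra] | | lra | lra].
    intros x Hx E. specialize (HP (c - x) ltac:(lra)). replace (c - (c - x)) with x in HP by ring.
    rewrite E in HP. lra. }
  specialize (HP t2 Ht2). nra.
Qed.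

Lemma finv_diff_ab_zero_between f g a b c d : inD f -> inD g -> 0 < a -> 0 <= c -> c <= d ->
  d <= Rmin 1 (/ a) -> (forall x, c <= x <= d -> diff_ab f g a b x = 0) ->
  forall z, g d <= z <= g c -> diff_ab (finv f) (finv g) b a z = 0.
Proof.
  intros Hf Hg Ha Hc Hcd Hd HZ z Hz. destruct (window_scaled a d Ha ltac:(lra)) as [_ Hd1].
  destruct (proj1 (proj2 Hg) c ltac:(lra)). destruct (proj1 (proj2 Hg) d ltac:(lra)).
  destruct (finv_spec g z Hg ltac:(split; lra)) as [P1 P2].
  assert (c <= finv g z) by (apply (inD_le_rev g); auto; lra).
  assert (finv g z <= d) by (apply (inD_le_rev g); auto; lra).
  destruct (window_scaled a (finv g z) Ha ltac:(lra)) as [Haz _].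
  rewrite <- P2. apply finv_diff_ab_zero; [exact Hf | exact Hg | lra | exact Haz | apply HZ; lra].
Qed.

Lemma finv_diff_ab_opposite_sides f g a b c d eta w : inD f -> inD g -> 0 < a -> 0 < b ->
  0 < eta <= c -> c <= d -> d + eta <= Rmin 1 (/ a) ->
  (forall t1 t2, 0 < t1 <= eta -> 0 < t2 <= eta ->
     diff_ab f g a b (c - t1) * diff_ab f g a b (d + t2) < 0) ->
  (forall x, c - eta <= x <= c -> b * g x <= 1) -> b * g d <= 1 ->
  0 < w -> w <= g d - g (d + eta) -> w <= g (c - eta) - g c ->
  diff_ab (finv f) (finv g) b a (g d - w) * diff_ab (finv f) (finv g) b a (g c + w) < 0.
Proof.
  intros Hf Hg Ha Hb Heta Hcd HdL Hsides Hleft Hright Hw Hw1 Hw2.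
  destruct (window_scaled a (d + eta) Ha ltac:(lra)) as [_ Hde].
  pose proof (proj1 (proj2 Hg)) as Gb.
  pose proof (Gb (d + eta) ltac:(lra)). pose proof (Gb (c - eta) ltac:(lra)).
  pose proof (Gb c ltac:(lra)). pose proof (Gb d ltac:(lra)).
  destruct (finv_spec g (g d - w) Hg ltac:(split; lra)) as [Q1 Q2].
  destruct (finv_spec g (g c + w) Hg ltac:(split; lra)) as [R1 R2].
  set (x1 := finv g (g d - w)) in *. set (x2 := finv g (g c + w)) in *.
  assert (d < x1) by (apply (inD_lt_rev g); auto; lra).
  assert (x1 <= d + eta) by (apply (inD_le_rev g); auto; lra).
  assert (x2 < c) by (apply (inD_lt_rev g); auto; lra).
  assert (c - eta <= x2) by (apply (inD_le_rev g); auto; lra).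
  set (D := diff_ab f g a b) in *.
  assert (S12 : D x2 * D x1 < 0).
  { replace x1 with (d + (x1 - d)) by ring. replace x2 with (c - (c - x2)) by ring.
    apply Hsides; lra. }
  assert (D x1 <> 0) by (intro E; rewrite E in S12; lra).
  assert (D x2 <> 0) by (intro E; rewrite E in S12; lra).
  assert (B1 : 0 <= b * g x1 <= 1)
    by (split; [apply Rmult_le_pos; lra | rewrite Q2; nra]).
  assert (B2 : 0 <= b * g x2 <= 1) by (split; [apply Rmult_le_pos; lra | apply Hleft; lra]).
  destruct (window_scaled a x1 Ha ltac:(lra)) as [Hax1 _].
  destruct (window_scaled a x2 Ha ltac:(lra)) as [Hax2 _].
  pose proof (finv_diff_ab_sign f g a b x1 Hf Hg ltac:(lra) Hax1 B1 ltac:(auto)) as T1.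
  pose proof (finv_diff_ab_sign f g a b x2 Hf Hg ltac:(lra) Hax2 B2 ltac:(auto)) as T2.
  rewrite <- Q2, <- R2. fold D in T1, T2. nra.
Qed.

Lemma sign_switch_finv f g a b c d : inD f -> inD g -> 0 < a -> 0 < b ->
  sign_switch (diff_ab f g a b) 0 (Rmin 1 (/ a)) c d ->
  sign_switch (diff_ab (finv f) (finv g) b a) 0 (Rmin 1 (/ b)) (g d) (g c).
Proof.
  intros Hf Hg Ha Hb Hsw. pose proof Hsw as [Hc0 [Hcd [HdL [HZ _]]]].
  destruct (sign_switch_sides _ _ _ _ _ (cont_on_diff_ab f g a b Hf Hg Ha) Hsw)
    as [del [Hdel [Hdc [HdL' Hsides]]]].
  pose proof (proj1 (proj2 (window_bounds a Ha))) as HL1.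
  destruct (window_scaled a c Ha ltac:(lra)) as [Hac Hc1].
  destruct (window_scaled a d Ha ltac:(lra)) as [Had _].
  destruct (inD_props g Hg) as [Gc [_ [Gm Gp]]]. pose proof Hg as [_ [_ [Gs _]]].
  assert (Ebc : b * g c = f (a * c)) by (pose proof (HZ c ltac:(lra)); unfold diff_ab in *; lra).
  assert (Ebd : b * g d = f (a * d)) by (pose proof (HZ d ltac:(lra)); unfold diff_ab in *; lra).
  assert (Hbd : b * g d <= 1) by (rewrite Ebd; apply (proj1 (proj2 Hf)); lra).
  assert (Hbc1 : b * g c < 1)
    by (rewrite Ebc, <- (inD_0 f Hf); apply (inD_lt f); [exact Hf | lra | nra | lra]).
  assert (Hgcb : g c < / b)
    by (apply Rmult_lt_reg_l with (r := b); auto; rewrite Rinv_r by lra; lra).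
  destruct (cont_on_lt_nbhd g 0 1 c (/ b) Gc ltac:(lra) Hgcb) as [dg [Hdg Hdg']].
  pose proof (Rmin_l del (dg / 2)). pose proof (Rmin_r del (dg / 2)).
  set (eta := Rmin del (dg / 2)) in *. assert (Heta : 0 < eta) by (apply Rmin_pos; lra).
  assert (Hleft : forall x, c - eta <= x <= c -> b * g x <= 1).
  { intros x Hx. specialize (Hdg' x ltac:(lra) ltac:(unfold Rabs; destruct Rcase_abs; lra)).
    apply Rmult_lt_compat_l with (r := b) in Hdg'; [|lra]. rewrite Rinv_r in Hdg'; lra. }
  pose proof (Gs d (d + eta) ltac:(lra) ltac:(lra) ltac:(lra)).
  pose proof (Gs (c - eta) c ltac:(lra) ltac:(lra) ltac:(lra)).
  pose proof (Rmin_l (g d - g (d + eta)) (g (c - eta) - g c)).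
  pose proof (Rmin_r (g d - g (d + eta)) (g (c - eta) - g c)).
  set (ds := Rmin (g d - g (d + eta)) (g (c - eta) - g c)) in *.
  assert (Hgd : 0 < g d) by (apply Gp; lra).
  assert (Hgdc : g d <= g c) by (apply Gm; lra).
  apply (sign_switch_intro _ 0 (Rmin 1 (/ b)) (g d) (g c) ds); auto.
  - assert (g c < 1) by (rewrite <- (inD_0 g Hg); apply Gs; lra).
    unfold Rmin; destruct Rle_dec; lra.
  - apply (finv_diff_ab_zero_between f g a b c d); auto; lra.
  - apply Rmin_pos; lra.
  - intros w Hw. apply (finv_diff_ab_opposite_sides f g a b c d eta w); auto; try lra.
    intros t1 t2 Ht1 Ht2. apply Hsides; lra.
Qed.

Lemma chi_ge_finv f g a b k : inD f -> inD g -> 0 < a -> 0 < b ->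
  chi_ge (diff_ab f g a b) 0 (Rmin 1 (/ a)) k ->
  chi_ge (diff_ab (finv f) (finv g) b a) 0 (Rmin 1 (/ b)) k.
Proof.
  intros Hf Hg Ha Hb [l [Hnd [Hlen HF]]]. rewrite Forall_forall in HF.
  pose proof (proj1 (proj2 (window_bounds a Ha))).
  exists (map (fun p => (g (snd p), g (fst p))) l). split; [|split].
  - apply NoDup_map_NoDup_ForallPairs; auto.
    intros [c d] [c' d'] Hp Hq E. injection E as E1 E2.
    destruct (HF _ Hp) as [A1 [A2 [A3 _]]]. destruct (HF _ Hq) as [B1 [B2 [B3 _]]]. simpl in *.
    f_equal; apply (inD_inj g); auto; lra.
  - rewrite length_map; auto.
  - apply Forall_forall. intros [x y] Hxy. apply in_map_iff in Hxy as [[c d] [E Hin]].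
    injection E as <- <-. apply sign_switch_finv; auto. apply (HF _ Hin).
Qed.

Lemma dominated_finv f g : inD f -> inD g -> dominated g f -> dominated (finv g) (finv f).
Proof.
  intros Hf Hg [Hcr Hle]. apply crossing_eq_2 in Hcr as [H3 [a [b [Ha [Hb H2]]]]].
  pose proof (finv_inD f Hf) as Hf'. pose proof (finv_inD g Hg) as Hg'.
  split; [|apply finv_le; auto]. apply crossing_eq_2. split.
  - intros a' b' Ha' Hb' Hc. apply (H3 b' a' Hb' Ha').
    eapply chi_ge_ext; [|exact (chi_ge_finv _ _ a' b' 3 Hf' Hg' Ha' Hb' Hc)].
    intros x Hx. destruct (window_scaled b' x Hb' Hx). unfold diff_ab.
    rewrite !finv_involutive by (auto; lra). reflexivity.
  - exists b, a. do 2 (split; auto). apply chi_ge_finv; auto.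
Qed.

Theorem theorem3p4 (f g : R -> R) :
  inD f -> inD g -> dominated g f ->
  dominated (Iop g) (Iop f) /\ dominated (Top g) (Top f).
Proof.
  intros Hf Hg Hd. split.
  - apply dominated_Iop; auto.
  - apply dominated_Iop; [apply finv_inD; auto | apply finv_inD; auto | apply dominated_finv; auto].
Qed.
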